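(* Let $(A,E)$ be the direct producted noncommutative probability space over $D_N$ of noncommutative probability spaces $(A_1,\varphi_1),\dots,(A_N,\varphi_N)$, and let $x_1=(a_1,\dots,a_N)$ and $x_2=(b_1,\dots,b_N)$ be elements of $A$. Then $x_1$ and $x_2$ are free over $D_N$ in $(A,E)$ if and only if, for all $j=1,\dots,N$, the nonzero $a_j$ and $b_j$ are free in $(A_j,\varphi_j)$.
   Context: Each $(A_j,\varphi_j)$ is a unital complex algebra with a linear functional. $A=\times_{j=1}^N A_j$ with componentwise operations; $D_N=\mathbb{C}^N$ with componentwise operations, identified with the central subalgebra $\{(\alpha_1 1,\dots,\alpha_N 1)\}$ of $A$; $E((a_1,\dots,a_N))=(\varphi_1(a_1),\dots,\varphi_N(a_N))$. $D_N$-valued cumulants: $k_n(y_1,\dots,y_n)=\sum_{\pi\in NC(n)}\prod_{V\in\pi}E(\prod_{i\in V}y_i)\,\mu(\pi,1_n)$ ($NC(n)$ noncrossing partitions, $\mu$ Möbius function). Elements $x_1,x_2$ are free over $D_N$ if all mixed $D_N$-valued cumulants of elements of the algebras generated by $\{x_1\}\cup D_N$ and $\{x_2\}\cup D_N$ vanish. Scalar freeness in $(A_j,\varphi_j)$ is the usual (Voiculescu) freeness, equivalently vanishing of mixed scalar cumulants. *)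

From mathcomp Require Import all_boot all_order all_algebra.
Set Implicit Arguments. Unset Strict Implicit. Unset Printing Implicit Defensive.
Import Order.TTheory GRing.Theory Num.Theory.
Local Open Scope ring_scope.

Definition crossing n (V W : {set 'I_n}) : bool :=
  [exists a : 'I_n, exists b : 'I_n, exists c : 'I_n, exists d : 'I_n,
     [&& (a < b)%N, (b < c)%N, (c < d)%N,
         a \in V, c \in V, b \in W & d \in W]].

Definition is_NC n (P : {set {set 'I_n}}) : bool :=
  partition P [set: 'I_n] &&
  [forall V in P, forall W in P, (V != W) ==> ~~ crossing V W].

Definition refines n (P Q : {set {set 'I_n}}) : bool :=
  [forall V in P, exists W in Q, V \subset W].

Definition one_part n : {set {set 'I_n}} := [set [set: 'I_n]].

(* The recursion is on a fuel parameter; strictly coarser partitions have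
   strictly fewer blocks, so fuel #|P| suffices. *)
Fixpoint mob_aux n (k : nat) (P : {set {set 'I_n}}) : int :=
  match k with
  | 0 => 0
  | k'.+1 =>
      if P == one_part n then 1
      else - \sum_(Q : {set {set 'I_n}} | [&& is_NC Q, refines P Q & Q != P])
               mob_aux k' Q
  end.

Definition mob n (P : {set {set 'I_n}}) : int := mob_aux #|P| P.

Section Product.
Variables (C : numClosedFieldType) (N : nat) (A : 'I_N -> algType C).

Definition prodA := forall j : 'I_N, A j.

Definition prod_add (x y : prodA) : prodA := fun j => x j + y j.
Definition prod_mul (x y : prodA) : prodA := fun j => x j * y j.
(* embedding of D_N = C^N as the central subalgebra (alpha_1 1, ..., alpha_N 1) *)
Definition prod_D (d : 'I_N -> C) : prodA := fun j => (d j)%:A.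

Inductive in_algD (x : prodA) : prodA -> Prop :=
  | algD_x : in_algD x x
  | algD_D d : in_algD x (prod_D d)
  | algD_add y z : in_algD x y -> in_algD x z -> in_algD x (prod_add y z)
  | algD_mul y z : in_algD x y -> in_algD x z -> in_algD x (prod_mul y z).

(* D_N-valued cumulant k_n(y_1,...,y_n), with E = (phi_1, ..., phi_N);
   operations in D_N = C^N are componentwise, so its j-th component is
   sum_{P in NC(n)} (prod_{V in P} phi_j(prod_{i in V} y_i(j))) mu(P,1_n),
   where the inner product is taken in increasing order of i. *)
Definition cumD (phi : forall j, A j -> C) n (y : 'I_n -> prodA) : 'I_N -> C :=
  fun j => \sum_(P : {set {set 'I_n}} | is_NC P)
             (\prod_(V in P) phi j (\prod_(i in V) y i j)) * (mob P)%:~R.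

Definition free_over_D (phi : forall j, A j -> C) (x1 x2 : prodA) : Prop :=
  forall n (y : 'I_n -> prodA) (ind : 'I_n -> bool),
    (forall k, in_algD (if ind k then x1 else x2) (y k)) ->
    (exists k l, ind k != ind l) ->
    forall j, cumD phi y j = 0.

End Product.

Section Scalar.
Variables (C : numClosedFieldType) (B : algType C).

Inductive in_alg1 (a : B) : B -> Prop :=
  | alg1_a : in_alg1 a a
  | alg1_c c : in_alg1 a (c%:A)
  | alg1_add y z : in_alg1 a y -> in_alg1 a z -> in_alg1 a (y + z)
  | alg1_mul y z : in_alg1 a y -> in_alg1 a z -> in_alg1 a (y * z).

Definition free_scalar (phi : B -> C) (a b : B) : Prop :=
  forall (n : nat) (c : nat -> B) (ind : nat -> bool),
    (0 < n)%N ->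
    (forall k, (k < n)%N -> in_alg1 (if ind k then a else b) (c k)) ->
    (forall k, (k.+1 < n)%N -> ind k != ind k.+1) ->
    (forall k, (k < n)%N -> phi (c k) = 0) ->
    phi (\prod_(0 <= k < n) c k) = 0.

End Scalar.

(* Over D_N everything is computed componentwise: the j-th component of a
   D_N-valued cumulant is the scalar free cumulant, in (A_j, phi_j), of the j-th
   components, and the algebra generated by x and D_N projects onto the unital
   algebra generated by x(j), each element of which lifts back.  So the theorem
   reduces to Speicher's characterisation of freeness in a single space: a and b
   are free iff all mixed free cumulants of elements of alg(1, a) and alg(1, b)
   vanish.  If mixed cumulants vanish, then in the moment-cumulant
   expansion of an alternating product of centred elements every noncrossing
   partition has a mixed block or a singleton block, so each term is zero.
   Conversely, freeness kills a mixed cumulant by induction on its order: two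
   adjacent entries of the same colour are multiplied together (cumulants with
   products as arguments), and if the colours alternate the entries are centred,
   which does not change cumulants of order at least two.  Finally, 0 is free
   from everything, which takes care of vanishing components. *)

From mathcomp Require Import all_boot all_order all_algebra zify.
Set Implicit Arguments. Unset Strict Implicit. Unset Printing Implicit Defensive.
Import Order.TTheory GRing.Theory Num.Theory.
Local Open Scope ring_scope.

(** * Partitions and noncrossing partitions *)

Section PartitionFacts.
Variable T : finType.
Implicit Types (A D V W : {set T}) (P : {set {set T}}).

Lemma set1_neq0 (k : T) : [set k] != set0.
Proof. by apply/set0Pn; exists k; rewrite inE. Qed.

Lemma setD1_notin (x : T) A : x \notin A -> A :\ x = A.
Proof. by move=> xA; apply/setDidPl; rewrite disjoint_sym disjoints1. Qed.

Lemma partition_eq_block P D V V' x : partition P D -> V \in P -> V' \in P ->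
  x \in V -> x \in V' -> V = V'.
Proof.
move=> /partition_trivIset tP VP V'P xV xV'.
by rewrite -(def_pblock tP VP xV) (def_pblock tP V'P xV').
Qed.

Lemma partition_exists_block P D x : partition P D -> x \in D ->
  exists2 V, V \in P & x \in V.
Proof. by move=> pP; rewrite -(cover_partition pP) => /bigcupP[V VP xV]; exists V. Qed.

Lemma partition_block_witness P D V : partition P D -> V \in P -> exists x, x \in V.
Proof. by move=> pP /(partition_neq0 pP) /set0Pn. Qed.

Lemma partitionI P D :
  (forall W, W \in P -> W != set0) ->
  (forall W, W \in P -> W \subset D) ->
  (forall x, x \in D -> exists2 W, W \in P & x \in W) ->
  (forall W W' x, W \in P -> W' \in P -> x \in W -> x \in W' -> W = W') ->
  partition P D.
Proof.
move=> h0 hs hc hu; apply/and3P; split.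
- rewrite eqEsubset; apply/andP; split; first by apply/bigcupsP => W /hs.
  by apply/subsetP => x /hc[W WP xW]; apply/bigcupP; exists W.
- apply/trivIsetP => V W VP WP nVW; rewrite -setI_eq0; apply/set0Pn => -[x].
  by rewrite inE => /andP[xV xW]; move: nVW; rewrite (hu V W x VP WP xV xW) eqxx.
- by apply/negP => /h0; rewrite eqxx.
Qed.

End PartitionFacts.

Section NoncrossingPartitions.
Variable n : nat.
Local Notation T := 'I_n.
Implicit Types (S U V W X : {set T}) (P Q σ τ ρ π : {set {set T}}).

Definition noncrossing P :=
  [forall V in P, forall W in P, (V != W) ==> ~~ crossing V W].

Definition ncpart S P := partition P S && noncrossing P.

Lemma crossingP V W :
  reflect (exists a b c d : T, [/\ (a < b < c)%N, (c < d)%N,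
             a \in V, c \in V & (b \in W) && (d \in W)])
          (crossing V W).
Proof.
apply: (iffP existsP) => [[a]|[a [b [c [d [/andP[ab bc] cd aV cV /andP[bW dW]]]]]]].
  move=> /existsP[b /existsP[c /existsP[d /and5P[ab bc cd aV /and3P[cV bW dW]]]]].
  by exists a, b, c, d; rewrite ab bc bW dW.
exists a; apply/existsP; exists b; apply/existsP; exists c; apply/existsP.
by exists d; rewrite ab bc cd aV cV bW dW.
Qed.

Lemma crossingI V W (a b c d : T) : (a < b)%N -> (b < c)%N -> (c < d)%N ->
  a \in V -> c \in V -> b \in W -> d \in W -> crossing V W.
Proof.
by move=> ab bc cd aV cV bW dW; apply/crossingP; exists a, b, c, d; rewrite ab bc bW dW.
Qed.

Lemma crossingS V V' W W' : V \subset V' -> W \subset W' ->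
  crossing V W -> crossing V' W'.
Proof.
move=> /subsetP sV /subsetP sW /crossingP[a [b [c [d [/andP[ab bc] cd aV cV /andP[bW dW]]]]]].
exact: crossingI ab bc cd (sV a aV) (sV c cV) (sW b bW) (sW d dW).
Qed.

Lemma crossing1l k W : ~~ crossing [set k] W.
Proof.
apply/crossingP => -[a [b [c [d [/andP[ab bc] _ /set1P ak /set1P ck _]]]]].
by subst a c; lia.
Qed.

Lemma crossing1r k W : ~~ crossing W [set k].
Proof.
apply/crossingP => -[a [b [c [d [/andP[ab bc] cd _ _ /andP[/set1P bk /set1P dk]]]]]].
by subst b d; lia.
Qed.

Lemma noncrossingP P :
  reflect (forall V W, V \in P -> W \in P -> V != W -> ~~ crossing V W) (noncrossing P).
Proof.
apply: (iffP forall_inP) => [H V W VP WP|H V VP].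
  by move: (H V VP) => /forall_inP /(_ W WP) /implyP.
by apply/forall_inP => W WP; apply/implyP; exact: H.
Qed.

Lemma noncrossingS P Q : P \subset Q -> noncrossing Q -> noncrossing P.
Proof.
by move=> /subsetP sPQ /noncrossingP H; apply/noncrossingP => V W /sPQ VQ /sPQ; exact: H.
Qed.

Lemma ncpart1 S : S != set0 -> ncpart S [set S].
Proof.
move=> S0; rewrite /ncpart /partition cover1 eqxx trivIset1 inE eq_sym S0 /=.
by apply/noncrossingP => V W /set1P-> /set1P->; rewrite eqxx.
Qed.

Lemma ncpart_card_gt0 S P : S != set0 -> ncpart S P -> (0 < #|P|)%N.
Proof.
move=> /set0Pn[x xS] /andP[pP _]; have [V VP _] := partition_exists_block pP xS.
by apply/card_gt0P; exists V.
Qed.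

Lemma ncpart_block_proper S σ V : ncpart S σ -> σ != [set S] -> V \in σ ->
  (#|V| < #|S|)%N /\ V != set0.
Proof.
move=> /andP[pσ _] nσ1 Vσ; split; last exact: partition_neq0 pσ Vσ.
have sVS := partitionS pσ Vσ; rewrite ltn_neqAle subset_leq_card // andbT.
apply: contra nσ1 => /eqP eVS.
have {eVS} eVS : V = S by apply/eqP; rewrite eqEcard sVS eVS leqnn.
subst V; apply/eqP/setP => W; rewrite inE; apply/idP/eqP => [Wσ|->//].
have [x xW] := partition_block_witness pσ Wσ.
exact: partition_eq_block pσ Wσ Vσ xW (subsetP (partitionS pσ Wσ) x xW).
Qed.

Lemma refinesP P Q :
  reflect (forall V, V \in P -> exists2 W, W \in Q & V \subset W) (refines P Q).
Proof.
apply: (iffP forall_inP) => H V /H; first by case/exists_inP=> W; exists W.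
by case=> W WQ sVW; apply/exists_inP; exists W.
Qed.

Lemma refines_refl P : refines P P.
Proof. by apply/refinesP => V VP; exists V. Qed.

Lemma refines1 S τ : partition τ S -> refines τ [set S].
Proof. by move=> pτ; apply/refinesP => W Wτ; exists S; rewrite ?set11 ?(partitionS pτ Wτ). Qed.

Lemma refines1_eq S Q : partition Q S -> refines [set S] Q -> Q = [set S].
Proof.
move=> pQ /refinesP /(_ S (set11 S)) [W WQ sSW].
have eW : W = S by apply/eqP; rewrite eqEsubset sSW (partitionS pQ WQ).
subst W; apply/setP => W; rewrite inE; apply/idP/eqP => [W'Q|->//].
have [x xW] := partition_block_witness pQ W'Q.
exact: partition_eq_block pQ W'Q WQ xW (subsetP (partitionS pQ W'Q) x xW).
Qed.

Definition coarse_block Q V := odflt set0 [pick W in Q | V \subset W].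

Lemma coarse_blockP S Q P V : partition Q S -> refines P Q -> V \in P ->
  coarse_block Q V \in Q /\ V \subset coarse_block Q V.
Proof.
move=> pQ /refinesP rPQ VP; rewrite /coarse_block; case: pickP => [W /andP[]|no] //=.
by have [W WQ sVW] := rPQ V VP; have := no W; rewrite WQ sVW.
Qed.

(* [coarse_block Q] maps [P] onto [Q], and injectively only if [P = Q]. *)
Lemma refines_card_lt S P Q : partition P S -> partition Q S -> refines P Q ->
  Q != P -> (#|Q| < #|P|)%N.
Proof.
move=> pP pQ rPQ nQP; pose g := coarse_block Q.
have gP V : V \in P -> g V \in Q /\ V \subset g V := coarse_blockP pQ rPQ.
have eQ : Q = g @: P.
  apply/setP => W; apply/idP/imsetP => [WQ|[V /gP[gVQ _] ->//]].
  have [x xW] := partition_block_witness pQ WQ.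
  have [V VP xV] := partition_exists_block pP (subsetP (partitionS pQ WQ) x xW).
  have [gVQ sVg] := gP V VP.
  by exists V => //; exact: partition_eq_block pQ WQ gVQ xW (subsetP sVg x xV).
have le := leq_imset_card g P; rewrite ltn_neqAle eQ le andbT.
apply: contra nQP => /imset_injP ginj.
suff sPQ : P \subset Q by rewrite eq_sym eqEcard sPQ eQ le.
apply/subsetP => V VP; have [gVQ sVg] := gP V VP.
suff -> : V = g V by [].
apply/eqP; rewrite eqEsubset sVg; apply/subsetP => x xgV.
have [V' V'P xV'] := partition_exists_block pP (subsetP (partitionS pQ gVQ) x xgV).
have [gV'Q sV'g] := gP V' V'P.
by rewrite -(ginj V' V) // (partition_eq_block pQ gV'Q gVQ (subsetP sV'g x xV') xgV).
Qed.

(* [mob_aux] for an arbitrary ground set [S], with the fuel [k] decoupled from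
   [#|P|]: any fuel [k >= #|P|] gives the same value (see [moeb_rec_fuel]). *)
Fixpoint moeb_rec S k P : int :=
  if k is k'.+1 then
    if P == [set S] then 1
    else - \sum_(Q : {set {set T}} | [&& ncpart S Q, refines P Q & Q != P]) moeb_rec S k' Q
  else 0.

Definition moeb S P := moeb_rec S #|P| P.

Lemma mobE P : mob P = moeb [set: T] P.
Proof.
rewrite /mob /moeb; move: #|P| => k; elim: k P => //= k IH P.
by congr (if _ then _ else - _); apply: eq_bigr => Q _; exact: IH.
Qed.

Lemma moeb_rec_fuel S P k1 k2 : S != set0 -> ncpart S P ->
  (#|P| <= k1)%N -> (#|P| <= k2)%N -> moeb_rec S k1 P = moeb_rec S k2 P.
Proof.
move=> S0; elim: k1 k2 P => [|k1 IH] k2 P NP l1 l2.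
  by have := ncpart_card_gt0 S0 NP; rewrite lt0n -leqn0 l1.
case: k2 l2 => [|k2] l2; first by have := ncpart_card_gt0 S0 NP; rewrite lt0n -leqn0 l2.
rewrite /=; case: ifP => // _; congr (- _); apply: eq_bigr => Q /and3P[NQ rPQ nQP].
have lt := refines_card_lt (proj1 (andP NP)) (proj1 (andP NQ)) rPQ nQP.
by apply: IH => //; rewrite -ltnS; exact: leq_trans lt _.
Qed.

Lemma moeb1 S : moeb S [set S] = 1.
Proof. by rewrite /moeb cards1 /= eqxx. Qed.

Lemma moeb_recE S P : S != set0 -> ncpart S P -> P != [set S] ->
  moeb S P = - \sum_(Q | [&& ncpart S Q, refines P Q & Q != P]) moeb S Q.
Proof.
move=> S0 NP nP1; rewrite {1}/moeb; have := ncpart_card_gt0 S0 NP.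
case E: #|P| => [|k] // _; rewrite /= (negbTE nP1); congr (- _).
apply: eq_bigr => Q /and3P[NQ rPQ nQP].
have := refines_card_lt (proj1 (andP NP)) (proj1 (andP NQ)) rPQ nQP.
by rewrite E ltnS => lt; rewrite /moeb (moeb_rec_fuel S0 NQ lt (leqnn _)).
Qed.

Lemma sum_moeb_refines S P : S != set0 -> ncpart S P ->
  \sum_(Q | ncpart S Q && refines P Q) moeb S Q = (P == [set S])%:R.
Proof.
move=> S0 NP; case: eqP => [->|/eqP nP1].
  rewrite (big_pred1 [set S]) ?moeb1 // => Q; apply/andP/eqP => [[NQ r]|->].
    exact: refines1_eq (proj1 (andP NQ)) r.
  by rewrite ncpart1 // refines_refl.
rewrite (bigD1 P) /=; last by rewrite NP refines_refl.
rewrite (moeb_recE S0 NP nP1) addrC.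
by rewrite (eq_bigl (fun Q => [&& ncpart S Q, refines P Q & Q != P])) ?subrr // => Q;
  rewrite andbA.
Qed.

Definition subblocks τ V := [set W in τ | W \subset V].

Lemma in_subblocks τ V W : (W \in subblocks τ V) = (W \in τ) && (W \subset V).
Proof. by rewrite inE. Qed.

Lemma subblocks_sub τ V : subblocks τ V \subset τ.
Proof. by apply/subsetP => W; rewrite inE => /andP[]. Qed.

Lemma subblocks_partition S σ τ V : partition σ S -> partition τ S -> refines τ σ ->
  V \in σ -> partition (subblocks τ V) V.
Proof.
move=> pσ pτ /refinesP rτσ Vσ; apply: partitionI.
- by move=> W; rewrite inE => /andP[/(partition_neq0 pτ)].
- by move=> W; rewrite inE => /andP[].
- move=> x xV; have [W Wτ xW] := partition_exists_block pτ (subsetP (partitionS pσ Vσ) x xV).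
  exists W; rewrite // inE Wτ; have [V' V'σ sWV'] := rτσ W Wτ.
  by rewrite (partition_eq_block pσ Vσ V'σ xV (subsetP sWV' x xW)).
- by move=> W W' x; rewrite !inE => /andP[Wτ _] /andP[W'τ _]; exact: partition_eq_block pτ Wτ W'τ.
Qed.

Lemma subblocks_ncpart S σ τ V : ncpart S σ -> ncpart S τ -> refines τ σ ->
  V \in σ -> ncpart V (subblocks τ V).
Proof.
move=> /andP[pσ _] /andP[pτ nτ] r Vσ.
by rewrite /ncpart (subblocks_partition pσ pτ r Vσ) (noncrossingS (subblocks_sub τ V)).
Qed.

Lemma subblocks_self S τ V : partition τ S -> V \in τ -> subblocks τ V = [set V].
Proof.
move=> pτ Vτ; apply/setP => U; rewrite in_subblocks inE; apply/andP/eqP => [[Uτ sUV]|->].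
  have [x xU] := partition_block_witness pτ Uτ.
  exact: partition_eq_block pτ Uτ Vτ xU (subsetP sUV x xU).
by rewrite Vτ subxx.
Qed.

Lemma bigcup_subblocks σ τ : refines τ σ -> \bigcup_(V in σ) subblocks τ V = τ.
Proof.
move=> /refinesP r; apply/setP => W; apply/bigcupP/idP => [[V _]|Wτ].
  by rewrite inE => /andP[].
by have [V Vσ sWV] := r W Wτ; exists V; rewrite // inE Wτ.
Qed.

Section Glue.
Variables (S : {set T}) (σ : {set {set T}}) (f : {set T} -> {set {set T}}).
Hypothesis pσ : partition σ S.
Hypothesis pf : forall V, V \in σ -> partition (f V) V.

Definition glue := \bigcup_(V in σ) f V.

Lemma glue_partition : partition glue S.
Proof.
apply: partitionI.
- by move=> W /bigcupP[V Vσ WfV]; exact: partition_neq0 (pf Vσ) WfV.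
- move=> W /bigcupP[V Vσ WfV].
  exact: subset_trans (partitionS (pf Vσ) WfV) (partitionS pσ Vσ).
- move=> x xS; have [V Vσ xV] := partition_exists_block pσ xS.
  have [W WfV xW] := partition_exists_block (pf Vσ) xV.
  by exists W => //; apply/bigcupP; exists V.
- move=> W W' x /bigcupP[V Vσ WfV] /bigcupP[V' V'σ W'fV'] xW xW'.
  have eV : V = V'.
    exact: partition_eq_block pσ Vσ V'σ (subsetP (partitionS (pf Vσ) WfV) x xW)
                          (subsetP (partitionS (pf V'σ) W'fV') x xW').
  by subst V'; exact: partition_eq_block (pf Vσ) WfV W'fV' xW xW'.
Qed.

Lemma glue_refines : refines glue σ.
Proof.
by apply/refinesP => W /bigcupP[V Vσ WfV]; exists V; rewrite ?(partitionS (pf Vσ) WfV).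
Qed.

Lemma glue_ncpart : noncrossing σ -> (forall V, V \in σ -> noncrossing (f V)) ->
  ncpart S glue.
Proof.
move=> nσ nf; rewrite /ncpart glue_partition; apply/noncrossingP.
move=> W W' /bigcupP[V Vσ WfV] /bigcupP[V' V'σ W'fV'] nWW'.
have [eV|nV] := eqVneq V V'; first by subst V'; exact: noncrossingP (nf V Vσ) _ _ WfV W'fV' nWW'.
apply: contra (noncrossingP _ nσ V V' Vσ V'σ nV); apply: crossingS.
  exact: partitionS (pf Vσ) WfV.
exact: partitionS (pf V'σ) W'fV'.
Qed.

Lemma subblocks_glue V : V \in σ -> subblocks glue V = f V.
Proof.
move=> Vσ; apply/setP => W; rewrite inE; apply/andP/idP => [[]|WfV].
  move=> /bigcupP[V' V'σ WfV'] sWV; have [x xW] := partition_block_witness (pf V'σ) WfV'.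
  suff eV : V' = V by subst V'.
  exact: partition_eq_block pσ V'σ Vσ (subsetP (partitionS (pf V'σ) WfV') x xW) (subsetP sWV x xW).
by split; [apply/bigcupP; exists V | exact: partitionS (pf Vσ) WfV].
Qed.

End Glue.

Lemma prod_refines (R : comRingType) S σ τ (F : {set T} -> R) :
  partition σ S -> partition τ S -> refines τ σ ->
  \prod_(W in τ) F W = \prod_(V in σ) \prod_(W in subblocks τ V) F W.
Proof.
move=> pσ pτ r.
rewrite (partition_big (coarse_block σ) (mem σ)); last by move=> W /(coarse_blockP pσ r) [].
apply: eq_bigr => V Vσ; apply: eq_bigl => W; rewrite inE.
apply/andP/andP => [[Wτ /eqP <-]|[Wτ sWV]]; first by have [] := coarse_blockP pσ r Wτ.
split=> //; have [cσ sWc] := coarse_blockP pσ r Wτ.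
have [x xW] := partition_block_witness pτ Wτ.
by rewrite (partition_eq_block pσ cσ Vσ (subsetP sWc x xW) (subsetP sWV x xW)).
Qed.

(* Choosing a noncrossing partition of every block of [σ] is the same as choosing
   a noncrossing refinement [τ] of [σ], the choices being [subblocks τ V]. *)
Lemma prod_sum_ncpart (R : comRingType) S σ (G : {set T} -> {set {set T}} -> bool)
    (h : {set T} -> {set {set T}} -> R) :
  ncpart S σ ->
  \prod_(V in σ) \sum_(ρ | ncpart V ρ && G V ρ) h V ρ =
  \sum_(τ | [&& ncpart S τ, refines τ σ & [forall V in σ, G V (subblocks τ V)]])
      \prod_(V in σ) h V (subblocks τ V).
Proof.
move=> Nσ; have [pσ nσ] := andP Nσ.
rewrite (big_distr_big_dep set0) /=.
pose hf τ : {ffun {set T} -> {set {set T}}} :=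
  [ffun V => if V \in σ then subblocks τ V else set0].
rewrite (reindex_onto hf (fun f => glue σ f)); last first.
  move=> f /familyP Hf; apply/ffunP => V; rewrite ffunE.
  have := Hf V; case: ifP => [Vσ _|_]; last by rewrite inE => /eqP ->.
  apply: (subblocks_glue pσ) Vσ => V' V'σ.
  by have := Hf V'; rewrite V'σ inE => /andP[/andP[]].
apply: eq_big => [τ|τ _]; last by apply: eq_bigr => V Vσ; rewrite ffunE Vσ.
have -> : glue σ (hf τ) = \bigcup_(V in σ) subblocks τ V.
  by apply: eq_bigr => V Vσ; rewrite ffunE Vσ.
apply/andP/and3P => [[/familyP Hf /eqP eτ]|[Nτ r /forall_inP HG]].
  have HV V : V \in σ -> ncpart V (subblocks τ V) && G V (subblocks τ V).
    by move=> Vσ; have := Hf V; rewrite /= Vσ ffunE Vσ.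
  have pf V : V \in σ -> partition (subblocks τ V) V.
    by move=> /HV /andP[/andP[]].
  have r : refines τ σ.
    by rewrite -eτ; apply: glue_refines => V Vσ; exact: pf.
  split=> //; last by apply/forall_inP => V /HV /andP[].
  by rewrite -eτ; apply: glue_ncpart pσ pf nσ _ => V /HV /andP[/andP[]].
split; last by rewrite bigcup_subblocks.
apply/familyP => V /=; rewrite ffunE; case: ifP => [Vσ|_]; last by rewrite inE.
by apply/andP; split; [exact: subblocks_ncpart Nσ Nτ r Vσ | exact: HG].
Qed.

End NoncrossingPartitions.

(** * Free cumulants *)

Section Cumulants.
Variables (R : comRingType) (n : nat).
Local Notation T := 'I_n.
Implicit Types (S U V W X : {set T}) (P Q σ τ ρ π : {set {set T}}).

Definition cumulant (f : {set T} -> R) S :=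
  \sum_(σ | ncpart S σ) (\prod_(V in σ) f V) * (moeb S σ)%:~R.

Lemma eq_in_cumulant (f g : {set T} -> R) S :
  (forall V, V \subset S -> f V = g V) -> cumulant f S = cumulant g S.
Proof.
move=> e; apply: eq_bigr => σ /andP[pσ _]; congr (_ * _).
by apply: eq_bigr => V Vσ; apply/e/(partitionS pσ Vσ).
Qed.

Lemma eq_cumulant (f g : {set T} -> R) S : f =1 g -> cumulant f S = cumulant g S.
Proof. by move=> e; apply: eq_in_cumulant => V _. Qed.

Lemma ncpart_set1 k σ : ncpart [set k] σ = (σ == [set [set k]]).
Proof.
apply/idP/eqP => [/andP[pσ _]|->]; last exact/ncpart1/set1_neq0.
have block1 V : V \in σ -> V = [set k].
  move=> Vσ; have := partitionS pσ Vσ.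
  by rewrite subset1 (negbTE (partition_neq0 pσ Vσ)) orbF => /eqP.
have [V Vσ _] := partition_exists_block pσ (set11 k).
by apply/setP => W; rewrite inE; apply/idP/eqP => [/block1|->]; rewrite -?(block1 V).
Qed.

Variable f : {set T} -> R.

Lemma cumulant_set1 k : cumulant f [set k] = f [set k].
Proof.
rewrite /cumulant (big_pred1 [set [set k]]) => [|σ]; last exact: ncpart_set1.
by rewrite big_set1 moeb1 mulr1.
Qed.

Lemma sum_moeb_proper S τ : S != set0 -> ncpart S τ ->
  \sum_(σ | (ncpart S σ && (σ != [set S])) && (ncpart S τ && refines τ σ))
     ((moeb S σ)%:~R : R)
  = (τ == [set S])%:R - 1.
Proof.
move=> S0 Nτ; have := sum_moeb_refines S0 Nτ.
rewrite (bigD1 [set S]) /=; last by rewrite ncpart1 // refines1 //; case/andP: Nτ.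
rewrite moeb1 => /(congr1 (fun z => z - 1)); rewrite addrC addrK => e.
rewrite -rmorph_sum /=.
have -> : \sum_(σ | (ncpart S σ && (σ != [set S])) && (ncpart S τ && refines τ σ)) moeb S σ
          = (τ == [set S])%:R - 1.
  by rewrite -e; apply: eq_bigl => σ; rewrite Nτ /=; case: (ncpart S σ); rewrite /= 1?andbC.
by rewrite rmorphB /= rmorph_nat.
Qed.

(* Moebius inversion along the lattice of noncrossing partitions, by strong
   induction on [#|S|]: for [σ <> 1_S] every block is smaller, so the product of
   moments over [σ] expands into cumulants over the refinements of [σ]. *)
Lemma moment_cumulant S : S != set0 ->
  f S = \sum_(π | ncpart S π) \prod_(V in π) cumulant f V.
Proof.
have [m] := ubnP #|S|; elim: m S => // m IH S ltS S0.
have expand σ : ncpart S σ -> σ != [set S] ->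
    \prod_(V in σ) f V = \sum_(τ | ncpart S τ && refines τ σ) \prod_(W in τ) cumulant f W.
  move=> Nσ nσ1.
  transitivity (\prod_(V in σ) \sum_(ρ | ncpart V ρ && true) \prod_(W in ρ) cumulant f W).
    apply: eq_bigr => V Vσ; have [lt V0] := ncpart_block_proper Nσ nσ1 Vσ.
    by rewrite (IH V) ?(leq_trans lt) //; apply: eq_bigl => ρ; rewrite andbT.
  rewrite (prod_sum_ncpart (fun _ _ => true) _ Nσ).
  apply: eq_big => [τ|τ /and3P[Nτ r _]].
    by apply/and3P/andP => [[-> ->]|[-> ->]] //; split=> //; apply/forall_inP.
  by rewrite (prod_refines _ (proj1 (andP Nσ)) (proj1 (andP Nτ)) r).
have proper_sum : \sum_(σ | ncpart S σ && (σ != [set S])) (\prod_(V in σ) f V) * (moeb S σ)%:~R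
    = - \sum_(τ | ncpart S τ && (τ != [set S])) \prod_(W in τ) cumulant f W.
  under eq_bigr => σ /andP[Nσ nσ1] do rewrite expand // big_distrl.
  rewrite (exchange_big_dep (fun τ => ncpart S τ)) /=; last by move=> ? ? _ /andP[].
  under eq_bigr => τ Nτ do rewrite -big_distrr sum_moeb_proper //.
  rewrite (bigD1 [set S]) ?ncpart1 //= eqxx subrr mulr0 add0r -sumrN.
  by apply: eq_bigr => τ /andP[_ /negbTE ->]; rewrite sub0r mulrN1.
rewrite (bigD1 [set S]) ?ncpart1 //= big_set1 {1}/cumulant (bigD1 [set S]) ?ncpart1 //=.
by rewrite big_set1 moeb1 mulr1 proper_sum subrK.
Qed.

Lemma cumulant_unique (c : {set T} -> R) S0 :
  (forall U, U \subset S0 -> U != set0 -> f U = \sum_(π | ncpart U π) \prod_(V in π) c V) ->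
  forall U, U \subset S0 -> U != set0 -> c U = cumulant f U.
Proof.
move=> H U; have [m] := ubnP #|U|; elim: m U => // m IH U ltU sU U0.
have := moment_cumulant U0; rewrite H // (bigD1 [set U]) ?ncpart1 //=.
rewrite [in X in _ = X](bigD1 [set U]) ?ncpart1 //= !big_set1.
suff -> : \sum_(π | ncpart U π && (π != [set U])) \prod_(V in π) c V =
          \sum_(π | ncpart U π && (π != [set U])) \prod_(V in π) cumulant f V by move/addIr.
apply: eq_bigr => π /andP[Nπ nπ1]; apply: eq_bigr => V Vπ.
have [lt V0] := ncpart_block_proper Nπ nπ1 Vπ.
apply: IH; rewrite ?(leq_trans lt) //.
exact: subset_trans (partitionS (proj1 (andP Nπ)) Vπ) sU.
Qed.

Lemma ncpart_setU1 U k π : k \in U -> ncpart (U :\ k) π -> ncpart U ([set k] |: π).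
Proof.
move=> kU /andP[pπ nπ]; apply/andP; split.
  have D : [disjoint [set k] & U :\ k] by rewrite disjoints1 !inE eqxx.
  by have := partitionU1 pπ (set1_neq0 k) D; rewrite (setD1K kU).
apply/noncrossingP => V W /setU1P[->|Vπ] /setU1P[->|Wπ] nVW.
- by rewrite eqxx in nVW.
- exact: crossing1l.
- exact: crossing1r.
- exact: (noncrossingP _ nπ).
Qed.

Lemma ncpart_setD1 U k π : ncpart U π -> [set k] \in π -> ncpart (U :\ k) (π :\ [set k]).
Proof.
move=> /andP[pπ nπ] kπ; rewrite /ncpart (partitionD1 pπ kπ).
exact: noncrossingS (subD1set _ _) nπ.
Qed.

Lemma sum_ncpart_singleton U k (F : {set {set T}} -> R) : k \in U ->
  \sum_(π | ncpart U π && ([set k] \in π)) F π =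
  \sum_(π | ncpart (U :\ k) π) F ([set k] |: π).
Proof.
move=> kU.
rewrite (reindex_onto (fun π => [set k] |: π) (fun π => π :\ [set k])); last first.
  by move=> π /andP[_ kπ]; rewrite setD1K.
apply: eq_bigl => π; rewrite setU11 andbT.
apply/andP/idP => [[Nπ /eqP eπ]|Nπ]; first by have := ncpart_setD1 Nπ (setU11 _ _); rewrite eπ.
rewrite ncpart_setU1 //; split=> //; rewrite setU1K //.
apply/negP => /(partitionS (proj1 (andP Nπ))).
by rewrite sub1set !inE eqxx.
Qed.

(* By induction, the partitions of [U] other than [1_U] that contribute to
   [f U] are those with the singleton block [{k}], and they add up to
   [f (U :\ k) = f U]. *)
Lemma cumulant_blind_point k : f set0 = 1 -> (forall U, f U = f (U :\ k)) ->
  forall U, k \in U -> (1 < #|U|)%N -> cumulant f U = 0.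
Proof.
move=> f0 fk U; have [m] := ubnP #|U|; elim: m U => // m IH U ltU kU cU.
have U0 : U != set0 by apply/set0Pn; exists k.
have Uk : U != [set k] by apply: contraTneq cU => ->; rewrite cards1.
have nonsingleton_term π : ncpart U π -> π != [set U] -> [set k] \notin π ->
    \prod_(V in π) cumulant f V = 0.
  move=> Nπ nπ1 nk; have pπ := proj1 (andP Nπ).
  have kc : k \in cover π by rewrite (cover_partition pπ).
  rewrite (bigD1 (pblock π k)) ?pblock_mem //= IH ?mul0r ?mem_pblock //.
    by have [lt _] := ncpart_block_proper Nπ nπ1 (pblock_mem kc); exact: leq_trans lt _.
  rewrite ltnNge; apply: contra nk => le1.
  suff <- : pblock π k = [set k] by exact: pblock_mem.
  by apply/eqP; rewrite eq_sym eqEcard sub1set mem_pblock kc cards1 le1.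
have := moment_cumulant U0; rewrite (bigD1 [set U]) ?ncpart1 //= big_set1.
rewrite (bigID (fun π => [set k] \in π)) /= [X in _ + (_ + X)]big1 ?addr0; last first.
  by move=> π /andP[/andP[Nπ nπ1] nk]; exact: nonsingleton_term.
rewrite (eq_bigl (fun π => ncpart U π && ([set k] \in π))); last first.
  move=> π; case: (boolP ([set k] \in π)) => kπ; rewrite ?andbT ?andbF //.
  by apply: andb_idr => _; apply: contraNneq Uk => eπ; move: kπ; rewrite eπ => /set1P <-.
rewrite sum_ncpart_singleton //.
under eq_bigr => π Nπ.
  rewrite big_setU1 /= ?cumulant_set1 ?(fk [set k]) ?setDv ?f0 ?mul1r; last first.
    by apply/negP => /(partitionS (proj1 (andP Nπ))); rewrite sub1set !inE eqxx.
over.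
rewrite -moment_cumulant -?(fk U); first by rewrite -{1}[f U]add0r => /addIr <-.
by apply: contraTneq cU => kU0; rewrite -(setD1K kU) kU0 setU0 cards1.
Qed.

End Cumulants.

(** * Ordered products and monotone relabelling *)

Section OrderedProducts.
Variable B : ringType.

Definition ord_lt n (x y : 'I_n) := (x < y)%N.

Lemma ord_lt_trans n : transitive (@ord_lt n).
Proof. exact: (fun y x z => @ltn_trans y x z). Qed.

Lemma ord_lt_irr n : irreflexive (@ord_lt n).
Proof. by move=> x; rewrite /ord_lt ltnn. Qed.

Lemma sorted_filter_index_enum n (X : {pred 'I_n}) :
  sorted (@ord_lt n) [seq k <- index_enum 'I_n | k \in X].
Proof.
apply: sorted_filter; first exact: ord_lt_trans.
rewrite [index_enum _]unlock -enumT.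
by have := iota_ltn_sorted 0 n; rewrite -val_enum_ord sorted_map.
Qed.

Lemma big_set_ord_seq n (X : {set 'I_n}) (F : 'I_n -> B) :
  \prod_(k in X) F k = \prod_(k <- [seq k <- index_enum 'I_n | k \in X]) F k.
Proof. by rewrite big_filter. Qed.

Lemma prod_setU_ordered n (X1 X2 : {set 'I_n}) (F : 'I_n -> B) :
  (forall a b, a \in X1 -> b \in X2 -> (a < b)%N) ->
  \prod_(k in X1 :|: X2) F k = \prod_(k in X1) F k * \prod_(k in X2) F k.
Proof.
move=> H; rewrite !big_set_ord_seq -big_cat; congr bigop.
apply: (irr_sorted_eq (@ord_lt_trans n) (@ord_lt_irr n)).
- exact: sorted_filter_index_enum.
- rewrite sorted_pairwise; last exact: ord_lt_trans.
  rewrite pairwise_cat -!sorted_pairwise ?sorted_filter_index_enum; try exact: ord_lt_trans.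
  by rewrite !andbT; apply/allrelP => a b; rewrite !mem_filter !mem_index_enum !andbT; exact: H.
- by move=> x; rewrite mem_cat !mem_filter !mem_index_enum !andbT inE.
Qed.

Lemma prod_split_at n (F : 'I_n -> B) (X : {set 'I_n}) k : k \in X ->
  \prod_(l in X) F l = \prod_(l in [set l in X | (l < k)%N]) F l *
                       (F k * \prod_(l in [set l in X | (k < l)%N]) F l).
Proof.
move=> kX; have eX : X = [set l in X | (l < k)%N] :|: ([set k] :|: [set l in X | (k < l)%N]).
  apply/setP => l; rewrite !inE; case: (ltngtP l k) => [lk|kl|/val_inj->]; last by rewrite eqxx kX.
    by rewrite -val_eqE (ltn_eqF lk) andbT andbF !orbF.
  by rewrite -val_eqE (gtn_eqF kl) andbT andbF.
rewrite {1}eX prod_setU_ordered => [|a b]; last first.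
  by rewrite !inE => /andP[_ ak] /orP[/eqP->|/andP[_ /(ltn_trans ak)]].
by rewrite prod_setU_ordered ?big_set1 // => a b /set1P-> /[!inE] /andP[].
Qed.

End OrderedProducts.

Section Relabel.
Variables (m n : nat) (e : 'I_m -> 'I_n).
Hypothesis emono : {mono e : a b / (a < b)%N}.
Local Notation S := (e @: [set: 'I_m]).
Implicit Types (V W : {set 'I_m}) (σ τ : {set {set 'I_m}}).

Lemma mono_ord_inj : injective e.
Proof.
move=> a b eab.
by case: (ltngtP a b) => [||/val_inj//]; rewrite -emono eab ltnn.
Qed.

Lemma prod_imset_mono (B : ringType) (F : 'I_n -> B) V :
  \prod_(k in e @: V) F k = \prod_(k in V) F (e k).
Proof.
rewrite !big_set_ord_seq -(big_map e xpredT F); congr bigop.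
apply: (irr_sorted_eq (@ord_lt_trans n) (@ord_lt_irr n)).
- exact: sorted_filter_index_enum.
- rewrite sorted_map; apply: sub_sorted (sorted_filter_index_enum V) => a b.
  by rewrite /ord_lt /= emono.
- move=> x; rewrite mem_filter mem_index_enum andbT.
  apply/imsetP/mapP => [[a aV ->]|[a]]; first by exists a; rewrite // mem_filter aV mem_index_enum.
  by rewrite mem_filter mem_index_enum andbT => aV ->; exists a.
Qed.

Definition relabel σ : {set {set 'I_n}} := [set e @: (V : {set 'I_m}) | V in σ].
Definition unlabel (σ : {set {set 'I_n}}) := [set e @^-1: (V : {set 'I_n}) | V in σ].

Lemma imset_mono_inj : injective (fun V : {set 'I_m} => e @: V).
Proof. exact: imset_inj mono_ord_inj. Qed.

Lemma relabel_inj : injective relabel.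
Proof. exact: imset_inj imset_mono_inj. Qed.

Lemma preimsetK V : e @^-1: (e @: V) = V.
Proof. by apply/setP => x; rewrite inE (mem_imset _ _ mono_ord_inj). Qed.

Lemma relabelK σ : unlabel (relabel σ) = σ.
Proof.
rewrite /unlabel /relabel -imset_comp -[RHS]imset_id.
by apply: eq_imset => V /=; exact: preimsetK.
Qed.

Lemma imsetK (V : {set 'I_n}) : V \subset S -> e @: (e @^-1: V) = V.
Proof.
move=> /subsetP sV; apply/setP => x; apply/imsetP/idP => [[y]|xV].
  by rewrite inE => ? ->.
by have /imsetP[y _ ey] := sV x xV; exists y; rewrite ?inE -?ey.
Qed.

Lemma crossing_relabel V W : crossing (e @: V) (e @: W) = crossing V W.
Proof.
apply/crossingP/crossingP => [[a' [b' [c' [d' []]]]]|[a [b [c [d []]]]]].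
  move=> /andP[ab bc] cd /imsetP[a aV ea] /imsetP[c cV ec].
  move=> /andP[/imsetP[b bW eb] /imsetP[d dW ed]].
  move: ab bc cd; rewrite ea eb ec ed !emono => ab bc cd.
  by exists a, b, c, d; rewrite ab bc cd aV cV bW dW.
move=> /andP[ab bc] cd aV cV /andP[bW dW].
by exists (e a), (e b), (e c), (e d); rewrite !emono ab bc cd !imset_f.
Qed.

Lemma noncrossing_relabel σ : noncrossing (relabel σ) = noncrossing σ.
Proof.
apply/noncrossingP/noncrossingP => H V W.
  move=> Vσ Wσ nVW; rewrite -crossing_relabel; apply: H; rewrite ?imset_f //.
  by rewrite (inj_eq imset_mono_inj).
move=> /imsetP[V' V'σ ->] /imsetP[W' W'σ ->]; rewrite (inj_eq imset_mono_inj) crossing_relabel.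
exact: H.
Qed.

Lemma ncpart_relabel σ : ncpart S (relabel σ) = ncpart [set: 'I_m] σ.
Proof. by rewrite /ncpart noncrossing_relabel (imset_partition _ _ mono_ord_inj). Qed.

Lemma refines_relabel σ τ : refines (relabel σ) (relabel τ) = refines σ τ.
Proof.
apply/refinesP/refinesP => H V.
  move=> Vσ; have [W /imsetP[W' W'τ ->] sW] := H _ (imset_f _ Vσ).
  by exists W' => //; rewrite -(preimsetK V) -(preimsetK W') preimsetS.
move=> /imsetP[V' V'σ ->]; have [W Wτ sW] := H V' V'σ.
by exists (e @: W); rewrite ?imset_f ?imsetS.
Qed.

Lemma unlabelK (σ : {set {set 'I_n}}) : ncpart S σ -> relabel (unlabel σ) = σ.
Proof.
move=> /andP[pσ _]; rewrite /relabel /unlabel -imset_comp -[RHS]imset_id.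
by apply: eq_in_imset => V Vσ /=; apply: imsetK; exact: partitionS pσ Vσ.
Qed.

Lemma moeb_relabel σ : moeb S (relabel σ) = moeb [set: 'I_m] σ.
Proof.
rewrite /moeb (card_imset _ imset_mono_inj); move: #|σ| => k; elim: k σ => //= k IH σ.
rewrite -(inj_eq relabel_inj) /relabel imset_set1 -/(relabel _); case: ifP => // _.
congr (- _); rewrite (reindex_onto relabel unlabel); last by move=> τ /and3P[/unlabelK].
apply: eq_big => [τ|τ _]; last exact: IH.
by rewrite relabelK eqxx andbT ncpart_relabel refines_relabel (inj_eq relabel_inj).
Qed.

Lemma cumulant_relabel (R : comRingType) (f : {set 'I_n} -> R) :
  cumulant f S = cumulant (fun V => f (e @: V)) [set: 'I_m].
Proof.
rewrite /cumulant (reindex_onto relabel unlabel); last by move=> τ /unlabelK.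
apply: eq_big => [τ|τ _]; first by rewrite relabelK eqxx andbT ncpart_relabel.
by rewrite moeb_relabel big_imset // => V W _ _; exact: imset_mono_inj.
Qed.

End Relabel.

Section EnumRelabel.
Variables (n : nat) (V : {set 'I_n}).

Lemma enum_val_mono (a b : 'I_#|V|) : (enum_val a < enum_val b)%N = (a < b)%N.
Proof.
have lt_enum_val (i j : 'I_#|V|) : (i < j)%N -> (enum_val i < enum_val j)%N.
  move=> ij; have x0 : 'I_n := enum_val i; rewrite !(enum_val_nth x0).
  apply: (sorted_ltn_nth (@ord_lt_trans n)); rewrite ?inE -?cardE ?ltn_ord //.
  by rewrite -deprecated_filter_index_enum sorted_filter_index_enum.
case: (ltngtP a b) => [|ba|/val_inj->]; [exact: lt_enum_val| |by rewrite !ltnn].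
by apply/negbTE; rewrite -leqNgt ltnW ?lt_enum_val.
Qed.

Lemma imset_enum_val : [set enum_val i | i in [set: 'I_#|V|]] = V.
Proof.
apply/setP => x; apply/imsetP/idP => [[i _ ->]|xV]; first exact: enum_valP.
by exists (enum_rank_in xV x); rewrite ?inE ?enum_rankK_in.
Qed.

Lemma cumulant_enum (R : comRingType) (f : {set 'I_n} -> R) :
  cumulant f V = cumulant (fun W => f (enum_val @: W)) [set: 'I_#|V|].
Proof. by rewrite -{1}imset_enum_val (cumulant_relabel enum_val_mono). Qed.

End EnumRelabel.

(** * Alternating colourings *)

Section Alternating.
Variable n : nat.
Local Notation T := 'I_n.
Implicit Types (S U V W X : {set T}) (σ τ ρ π : {set {set T}}) (col : T -> bool).

Definition adjacent S (a b : T) :=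
  [&& a \in S, b \in S, (a < b)%N & [forall c in S, ~~ ((a < c) && (c < b))%N]].

Definition alternating S col := forall a b, adjacent S a b -> col a != col b.

Definition monochrome col V := [forall x in V, forall y in V, col x == col y].

Lemma monochromeP col V :
  reflect (forall x y, x \in V -> y \in V -> col x = col y) (monochrome col V).
Proof.
apply: (iffP forall_inP) => [H x y /H /forall_inP Hx /Hx /eqP//|H x xV].
by apply/forall_inP => y yV; rewrite (H x y).
Qed.

Lemma adjacent_succ S a b : a \in S -> b \in S -> (a < b)%N ->
  (forall c, c \in S -> (a < c)%N -> (b <= c)%N) -> adjacent S a b.
Proof.
move=> aS bS ab bmin; rewrite /adjacent aS bS ab; apply/forall_inP => c cS.
by apply/negP => /andP[/(bmin c cS)]; rewrite leqNgt => /negP.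
Qed.

Lemma adjacent_setT (u v : T) : adjacent [set: T] u v -> val v = (val u).+1.
Proof.
case/and4P=> _ _ uv /forall_inP between; apply/eqP; rewrite eqn_leq uv andbT leqNgt.
apply/negP => lt; have lt2 : (u.+1 < n)%N := ltn_trans lt (ltn_ord v).
by move: (between (Ordinal lt2) (in_setT _)); rewrite /= ltnSn lt.
Qed.

Lemma monochromeN_card col S : ~~ monochrome col S -> (1 < #|S|)%N.
Proof.
case/forall_inPn => x xS /forall_inPn[y yS ne].
have nxy : x != y by apply: contraNneq ne => ->.
by rewrite (cardsD1 x) xS add1n ltnS card_gt0; apply/set0Pn; exists y; rewrite !inE eq_sym nxy.
Qed.

Lemma monochrome_setD1 col S i j : i \in S -> i != j -> col i = col j ->
  monochrome col (S :\ j) -> monochrome col S.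
Proof.
move=> iS nij cij /monochromeP mono; apply/monochromeP => x y xS yS.
pose sw u := if u == j then i else u.
have swS u : u \in S -> sw u \in S :\ j by rewrite /sw; case: eqP => [_|/eqP nu] uS; rewrite !inE ?nij ?nu.
have swc u : col (sw u) = col u by rewrite /sw; case: eqP => // ->.
by rewrite -(swc x) -(swc y); apply: mono; exact: swS.
Qed.

Section SingletonBlock.
Variables (S : {set T}) (π : {set {set T}}) (col : T -> bool).
Hypotheses (Nπ : ncpart S π) (alt : alternating S col)
  (mono : forall V, V \in π -> monochrome col V).
Hypothesis nosingleton : forall k, k \in S -> [set k] \notin π.

Let pπ := proj1 (andP Nπ).
Let cπ := cover_partition pπ.

Lemma block_mate x : x \in S -> exists2 y, y \in pblock π x & y != x.
Proof.
move=> xS; apply/exists_inP; apply: contraR (nosingleton xS) => /exists_inPn alone.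
suff <- : pblock π x = [set x] by rewrite pblock_mem ?cπ.
apply/eqP; rewrite eq_sym eqEsubset sub1set mem_pblock cπ xS /=.
by apply/subsetP => y /alone; rewrite negbK inE.
Qed.

Lemma pblock_sub x y : x \in S -> y \in pblock π x -> y \in S.
Proof. by move=> xS; apply/subsetP/(partitionS pπ)/pblock_mem; rewrite cπ. Qed.

Definition same_block_gap g :=
  [exists x : T, exists y : T, [&& (x < y)%N, (y - x == g)%N, x \in S & y \in pblock π x]].

Lemma same_block_gapP (x y : T) : (x < y)%N -> x \in S -> y \in pblock π x ->
  same_block_gap (y - x)%N.
Proof. by move=> xy xS yB; apply/existsP; exists x; apply/existsP; exists y; rewrite xy eqxx xS. Qed.

(* A pair [a < d] in a common block [V] at minimal distance gives the
   contradiction: the successor [b] of [a] in [S] has the other colour, so it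
   lies in another block [W], and any other point of [W] either makes [W] and [V]
   cross or lies closer than [d - a] to [b]. *)
Lemma nosingleton_empty : S = set0.
Proof.
apply/eqP; apply: contraT => /set0Pn[x0 x0S].
have tπ := partition_trivIset pπ.
have inB x : x \in S -> x \in pblock π x by move=> xS; rewrite mem_pblock cπ.
have Bπ x : x \in S -> pblock π x \in π by move=> xS; rewrite pblock_mem ?cπ.
have ex_gap : exists g, same_block_gap g.
  have [y0 y0B ny0] := block_mate x0S; have y0S := pblock_sub x0S y0B.
  case: (ltngtP x0 y0) => [xy|yx|/val_inj e]; last by rewrite e eqxx in ny0.
    by exists (y0 - x0)%N; exact: same_block_gapP.
  by exists (x0 - y0)%N; apply: same_block_gapP => //; rewrite (same_pblock tπ y0B) inB.
case: (ex_minnP ex_gap) => g /existsP[a /existsP[d /and4P[ad /eqP gad aS dB]]] gmin.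
have dS := pblock_sub aS dB.
have ex_succ : exists m, [exists c, [&& c \in S, (a < c)%N & val c == m]].
  by exists (val d); apply/existsP; exists d; rewrite dS ad eqxx.
case: (ex_minnP ex_succ) => _ /existsP[b /and3P[bS ab /eqP <-]] bmin'.
have bmin c : c \in S -> (a < c)%N -> (b <= c)%N.
  by move=> cS ac; apply: bmin'; apply/existsP; exists c; rewrite cS ac eqxx.
set V := pblock π a; have Vπ := Bπ a aS; have aV := inB a aS.
have bV : b \notin V.
  apply: contra (alt (adjacent_succ aS bS ab bmin)) => bV.
  by rewrite (monochromeP _ _ (mono Vπ) a b aV bV).
have bd : (b < d)%N.
  rewrite ltn_neqAle bmin // andbT; apply: contraNneq bV => /val_inj->.
  exact: dB.
set W := pblock π b; have Wπ := Bπ b bS; have bW := inB b bS.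
have nVW : V != W by apply: contraNneq bV => ->.
have [w wW nwb] := block_mate bS.
have wV : w \notin V.
  by apply: contra nVW => wV; apply/eqP; exact: partition_eq_block pπ Vπ Wπ wV wW.
have nc := noncrossingP _ (proj2 (andP Nπ)).
case: (ltngtP w a) => [wa|aw|/val_inj ewa]; last by rewrite ewa aV in wV.
  have nWV : W != V by rewrite eq_sym.
  by have := nc W V Wπ Vπ nWV; rewrite (crossingI wa ab bd wW bW aV dB).
have bw : (b < w)%N by rewrite ltn_neqAle eq_sym nwb bmin // (pblock_sub bS wW).
case: (ltngtP w d) => [wd|dw|/val_inj ewd]; last by rewrite ewd dB in wV.
  have := gmin _ (same_block_gapP bw bS wW).
  by rewrite -gad => gap; clear -ab bw wd gap; lia.
by have := nc V W Vπ Wπ nVW; rewrite (crossingI ab bd dw aV dB bW wW).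
Qed.

End SingletonBlock.

Lemma alternating_singleton_block S π col : ncpart S π -> S != set0 -> alternating S col ->
  (forall V, V \in π -> monochrome col V) -> exists2 k, k \in S & [set k] \in π.
Proof.
move=> Nπ S0 alt mono; apply/exists_inP; apply: contraR S0 => /exists_inPn nos.
by rewrite (nosingleton_empty Nπ alt mono nos).
Qed.

Lemma prod_cumulant_alternating (R : comRingType) (f : {set T} -> R) S π col :
  ncpart S π -> S != set0 -> alternating S col ->
  (forall V, V \in π -> ~~ monochrome col V -> cumulant f V = 0) ->
  (forall k, k \in S -> f [set k] = 0) -> \prod_(V in π) cumulant f V = 0.
Proof.
move=> Nπ S0 alt mixed0 single0.
case: (boolP [exists V in π, ~~ monochrome col V]) => [/exists_inP[V Vπ mV]|/exists_inPn mono].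
  by rewrite (bigD1 V) //= mixed0 ?mul0r.
have [k kS kπ] := alternating_singleton_block Nπ S0 alt (fun V Vπ => negbNE (mono V Vπ)).
by rewrite (bigD1 [set k]) //= cumulant_set1 single0 ?mul0r.
Qed.

End Alternating.

(** * Merging two adjacent points *)

Section MergeAdjacent.
Variable n : nat.
Local Notation T := 'I_n.
Implicit Types (S U V W X Z Bi Bj : {set T}) (P Q σ τ ρ π : {set {set T}}).
Variables (i j : T) (S0 : {set T}).
Hypothesis adjij : adjacent S0 i j.
Let iS : i \in S0. Proof. by case/and4P: adjij. Qed.
Let jS : j \in S0. Proof. by case/and4P: adjij. Qed.
Let ij : (i < j)%N. Proof. by case/and4P: adjij. Qed.

Lemma neq_ij : i != j.
Proof. by apply: contraTneq ij => ->; rewrite ltnn. Qed.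

Lemma outside_ij k : k \in S0 -> k != i -> k != j -> ((k < i)%N || (j < k)%N).
Proof.
move=> kS; rewrite -!val_eqE /= => ki kj.
case/and4P: adjij => _ _ _ /forall_inP/(_ k kS) between.
by clear -ki kj between; lia.
Qed.

(* No point of [Z] lies between [i] and [j], so a crossing with [Bi :|: Bj]
   persists after moving the offending point of [Bi :|: Bj] to [i] or [j]. *)
Lemma crossing_merged_block Bi Bj Z : i \in Bi -> j \in Bj -> Z \subset S0 ->
  i \notin Z -> j \notin Z -> crossing (Bi :|: Bj) Z || crossing Z (Bi :|: Bj) ->
  [|| crossing Bi Z, crossing Z Bi, crossing Bj Z | crossing Z Bj].
Proof.
move=> iBi jBj /subsetP ZS iZ jZ.
have anchor x : x \in Bi :|: Bj -> exists B, exists e : T,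
    [/\ (B == Bi) || (B == Bj), x \in B, e \in B & (i <= e <= j)%N].
  case/setUP => xB; [exists Bi, i | exists Bj, j].
    by rewrite eqxx leqnn (ltnW ij).
  by rewrite eqxx orbT leqnn (ltnW ij).
have zout z : z \in Z -> ((z < i)%N || (j < z)%N).
  move=> zZ; apply: outside_ij (ZS z zZ) _ _.
    by apply: contraNneq iZ => <-.
  by apply: contraNneq jZ => <-.
have cross B : (B == Bi) || (B == Bj) -> crossing B Z || crossing Z B ->
    [|| crossing Bi Z, crossing Z Bi, crossing Bj Z | crossing Z Bj].
  by case/orP => /eqP-> /orP[]->; rewrite ?orbT.
case/orP => /crossingP[a [b [c [d [/andP[ab bc] cd aP cP /andP[bQ dQ]]]]]].
  have [A [ea [hA aA eaA /andP[iea eaj]]]] := anchor a aP.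
  have [C [ec [hC cC ecC /andP[iec ecj]]]] := anchor c cP.
  case/orP: (zout d dQ) => [di|jd].
    by apply: (cross C hC); rewrite (crossingI bc cd (leq_trans di iec) bQ dQ cC ecC) orbT.
  case/orP: (zout b bQ) => [bi|jb].
    apply: (cross A hA).
    by rewrite (crossingI ab (leq_trans bi iea) (leq_ltn_trans eaj jd) aA eaA bQ dQ).
  by apply: (cross C hC); rewrite (crossingI (leq_ltn_trans ecj jb) bc cd ecC cC bQ dQ).
have [B [eb [hB bB ebB /andP[ieb ebj]]]] := anchor b bQ.
have [D [ed [hD dD edD /andP[ied edj]]]] := anchor d dQ.
case/orP: (zout c cP) => [ci|jc].
  by apply: (cross B hB); rewrite (crossingI ab bc (leq_trans ci ieb) aP cP bB ebB) orbT.
case/orP: (zout a aP) => [ai|ja].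
  apply: (cross D hD).
  by rewrite (crossingI (leq_trans ai ied) (leq_ltn_trans edj jc) cd aP cP edD dD) orbT.
by apply: (cross B hB); rewrite (crossingI (leq_ltn_trans ebj ja) ab bc ebB bB aP cP).
Qed.

Definition merge_blocks π := [set (if (i \in V) || (j \in V) then pblock π i :|: pblock π j else V) | V : {set T} in π].

Lemma mem_merge_blocks X π : partition π X -> i \in X -> j \in X -> forall V,
  (V \in merge_blocks π) = (V == pblock π i :|: pblock π j) || [&& V \in π, i \notin V & j \notin V].
Proof.
move=> pπ iX jX V; have cπ := cover_partition pπ.
apply/imsetP/idP => [[W Wπ ->]|].
  case: ifP => [_|/norP[iW jW]]; first by rewrite eqxx.
  by rewrite Wπ iW jW orbT.
case/orP => [/eqP ->|/and3P[Vπ iV jV]].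
  exists (pblock π i); first by apply: pblock_mem; rewrite cπ.
  by rewrite mem_pblock cπ iX.
by exists V => //; rewrite (negbTE iV) (negbTE jV).
Qed.

Lemma merge_blocks_set1 : merge_blocks [set S0] = [set S0].
Proof.
rewrite /merge_blocks imset_set1 iS /= (def_pblock (trivIset1 S0) (set11 S0) iS).
by rewrite (def_pblock (trivIset1 S0) (set11 S0) jS) setUid.
Qed.

Lemma merge_blocks_id ρ : (forall V, V \in ρ -> (i \notin V) && (j \notin V)) -> merge_blocks ρ = ρ.
Proof.
move=> H; rewrite /merge_blocks -[RHS]imset_id; apply: eq_in_imset => V Vρ.
by case/andP: (H V Vρ) => /negbTE -> /negbTE ->.
Qed.

Lemma sub_merged_block X τ W : partition τ X -> W \in τ -> W \subset pblock τ i :|: pblock τ j ->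
  i \in X -> j \in X -> (W = pblock τ i) \/ (W = pblock τ j).
Proof.
move=> pτ Wτ sW iX jX; have cτ := cover_partition pτ.
have [x xW] := partition_block_witness pτ Wτ; move: (subsetP sW x xW); rewrite inE => /orP[xB|xB].
  left; apply: partition_eq_block pτ Wτ _ xW xB; by apply: pblock_mem; rewrite cτ.
right; apply: partition_eq_block pτ Wτ _ xW xB; by apply: pblock_mem; rewrite cτ.
Qed.

Section MergeIn.
Variables (X : {set T}).
Hypotheses (XS : X \subset S0) (iX : i \in X) (jX : j \in X).

Lemma merge_blocks_partition π : partition π X -> partition (merge_blocks π) X.
Proof.
move=> pπ; have cπ := cover_partition pπ.
have Biπ : pblock π i \in π by rewrite pblock_mem ?cπ.
have Bjπ : pblock π j \in π by rewrite pblock_mem ?cπ.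
have iBi : i \in pblock π i by rewrite mem_pblock cπ.
have jBj : j \in pblock π j by rewrite mem_pblock cπ.
have JM := mem_merge_blocks pπ iX jX.
have outside V x : V \in π -> i \notin V -> j \notin V -> x \in V ->
    x \notin pblock π i :|: pblock π j.
  move=> Vπ iV jV xV; apply/negP => /setUP[] xB.
    by move: iV; rewrite (partition_eq_block pπ Vπ Biπ xV xB) iBi.
  by move: jV; rewrite (partition_eq_block pπ Vπ Bjπ xV xB) jBj.
apply: partitionI.
- move=> V; rewrite JM => /orP[/eqP->|/and3P[Vπ _ _]]; last exact: partition_neq0 pπ Vπ.
  by apply/set0Pn; exists i; rewrite inE iBi.
- move=> V; rewrite JM => /orP[/eqP->|/and3P[Vπ _ _]]; last exact: partitionS pπ Vπ.
  by rewrite subUset !(partitionS pπ).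
- move=> x xX; have [W Wπ xW] := partition_exists_block pπ xX.
  case: (boolP ((i \in W) || (j \in W))) => [/orP[iW|jW]|/norP[iW jW]].
  + exists (pblock π i :|: pblock π j); first by rewrite JM eqxx.
    by rewrite inE -(partition_eq_block pπ Wπ Biπ iW iBi) xW.
  + exists (pblock π i :|: pblock π j); first by rewrite JM eqxx.
    by rewrite inE -(partition_eq_block pπ Wπ Bjπ jW jBj) xW orbT.
  + by exists W => //; rewrite JM Wπ iW jW orbT.
- move=> V V' x; rewrite !JM => /orP[/eqP->|/and3P[Vπ iV jV]] /orP[/eqP->|/and3P[V'π iV' jV']] //.
  + by move=> xB /(outside _ _ V'π iV' jV'); rewrite xB.
  + by move=> /(outside _ _ Vπ iV jV) /negbTE ->.
  + exact: partition_eq_block pπ Vπ V'π.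
Qed.

Lemma merge_blocks_ncpart π : ncpart X π -> ncpart X (merge_blocks π).
Proof.
move=> /andP[pπ nπ]; rewrite /ncpart merge_blocks_partition //=.
have cπ := cover_partition pπ.
set Bi := pblock π i; set Bj := pblock π j.
have Biπ : Bi \in π by apply: pblock_mem; rewrite cπ.
have Bjπ : Bj \in π by apply: pblock_mem; rewrite cπ.
have iBi : i \in Bi by rewrite mem_pblock cπ.
have jBj : j \in Bj by rewrite mem_pblock cπ.
have nc := noncrossingP _ nπ.
have key Z : Z \in π -> i \notin Z -> j \notin Z ->
    crossing (Bi :|: Bj) Z || crossing Z (Bi :|: Bj) -> False.
  move=> Zπ iZ jZ cr.
  have ZS : Z \subset S0 := subset_trans (partitionS pπ Zπ) XS.
  have nBiZ : Bi != Z by apply: contraNneq iZ => <-.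
  have nBjZ : Bj != Z by apply: contraNneq jZ => <-.
  have := crossing_merged_block iBi jBj ZS iZ jZ cr.
  rewrite (negbTE (nc _ _ Biπ Zπ nBiZ)) (negbTE (nc _ _ Zπ Biπ _)) ?(eq_sym Z) //.
  by rewrite (negbTE (nc _ _ Bjπ Zπ nBjZ)) (negbTE (nc _ _ Zπ Bjπ _)) ?(eq_sym Z).
apply/noncrossingP => V V'; rewrite !(mem_merge_blocks pπ iX jX).
move=> /orP[/eqP->|/and3P[Vπ iV jV]] /orP[/eqP->|/and3P[V'π iV' jV']] nVV'.
- by rewrite eqxx in nVV'.
- by apply/negP => cr; apply: (key V' V'π iV' jV'); rewrite cr.
- by apply/negP => cr; apply: (key V Vπ iV jV); rewrite cr orbT.
- exact: nc.
Qed.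

Lemma pblock_merge_blocks π : ncpart X π ->
  pblock (merge_blocks π) i = pblock π i :|: pblock π j /\ pblock (merge_blocks π) j = pblock π i :|: pblock π j.
Proof.
move=> Nπ; have [pJ _] := andP (merge_blocks_ncpart Nπ); have [pπ _] := andP Nπ.
have cπ := cover_partition pπ.
have BJ : pblock π i :|: pblock π j \in merge_blocks π by rewrite (mem_merge_blocks pπ iX jX) eqxx.
split; apply: def_pblock (partition_trivIset pJ) BJ _; rewrite inE mem_pblock cπ ?iX ?jX ?orbT //.
Qed.

Section MergeRefinement.
Variable τ : {set {set T}}.
Hypothesis Nτ : ncpart X τ.
Let pτ := proj1 (andP Nτ).
Let cτ := cover_partition pτ.
Local Notation Bi := (pblock τ i).
Local Notation Bj := (pblock τ j).
Let Biτ : Bi \in τ. Proof. by rewrite pblock_mem ?cτ. Qed.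
Let Bjτ : Bj \in τ. Proof. by rewrite pblock_mem ?cτ. Qed.
Let iBi : i \in Bi. Proof. by rewrite mem_pblock cτ. Qed.
Let jBj : j \in Bj. Proof. by rewrite mem_pblock cτ. Qed.

Lemma mem_merge_blocks_subblocks σ V : partition σ X -> refines τ σ -> V \in σ ->
  Bi :|: Bj \subset V -> forall U, (U \in merge_blocks (subblocks τ V)) =
     (U == Bi :|: Bj) || [&& U \in subblocks τ V, i \notin U & j \notin U].
Proof.
move=> pσ r Vσ sB U; have pr := subblocks_partition pσ pτ r Vσ.
have /andP[Bir Bjr] : (Bi \in subblocks τ V) && (Bj \in subblocks τ V).
  by rewrite !in_subblocks Biτ Bjτ -!subUset.
have tr := partition_trivIset pr.
rewrite (mem_merge_blocks pr (subsetP sB i _) (subsetP sB j _)) ?inE ?iBi ?jBj ?orbT //.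
by rewrite (def_pblock tr Bir iBi) (def_pblock tr Bjr jBj).
Qed.

Lemma merged_block_meets U : U \in τ -> U \subset Bi :|: Bj -> (i \in U) || (j \in U).
Proof. by move=> Uτ sU; case: (sub_merged_block pτ Uτ sU iX jX) => ->; rewrite ?iBi ?jBj ?orbT. Qed.

Lemma refines_merge_blocks : refines τ (merge_blocks τ).
Proof.
have JM := mem_merge_blocks pτ iX jX.
apply/refinesP => W Wτ; case: (boolP ((i \in W) || (j \in W))) => [/orP[iW|jW]|/norP[iW jW]].
- exists (Bi :|: Bj); first by rewrite JM eqxx.
  by rewrite (partition_eq_block pτ Wτ Biτ iW iBi) subsetUl.
- exists (Bi :|: Bj); first by rewrite JM eqxx.
  by rewrite (partition_eq_block pτ Wτ Bjτ jW jBj) subsetUr.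
- by exists W; rewrite ?JM ?Wτ ?iW ?jW ?orbT.
Qed.

Lemma merge_blocks_subblocks V : V \in merge_blocks τ -> merge_blocks (subblocks τ V) = [set V].
Proof.
have pJ := proj1 (andP (merge_blocks_ncpart Nτ)).
rewrite (mem_merge_blocks pτ iX jX) => /orP[/eqP eV|/and3P[Vτ iV jV]]; last first.
  by rewrite (subblocks_self pτ Vτ) merge_blocks_id // => U /set1P->; rewrite iV jV.
have Vσ : V \in merge_blocks τ by rewrite (mem_merge_blocks pτ iX jX) eV eqxx.
apply/setP => U; rewrite (mem_merge_blocks_subblocks pJ refines_merge_blocks Vσ) -?eV // in_set1.
case: eqP => //= _; apply/negbTE/negP => /and3P[]; rewrite in_subblocks => /andP[Uτ sUV].
by rewrite eV in sUV; move: (merged_block_meets Uτ sUV) => /orP[]->.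
Qed.

Lemma merge_blocks_eq_of_subblocks σ : ncpart X σ -> pblock σ i = pblock σ j -> refines τ σ ->
  (forall V, V \in σ -> merge_blocks (subblocks τ V) = [set V]) -> merge_blocks τ = σ.
Proof.
move=> /andP[pσ _] eσ r H; have cσ := cover_partition pσ; have /refinesP rr := r.
set Vij := pblock σ i.
have Vijσ : Vij \in σ by rewrite pblock_mem ?cσ.
have iVij : i \in Vij by rewrite mem_pblock cσ.
have jVij : j \in Vij by rewrite /Vij eσ mem_pblock cσ.
have sub_Vij B x : B \in τ -> x \in B -> x \in Vij -> B \subset Vij.
  move=> Bτ xB xV; have [V' V'σ sV'] := rr B Bτ.
  by rewrite -(partition_eq_block pσ V'σ Vijσ (subsetP sV' x xB) xV).
have sBij : Bi :|: Bj \subset Vij by rewrite subUset (sub_Vij _ i) ?(sub_Vij _ j).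
have eVij : Vij = Bi :|: Bj.
  have := set11 Vij; rewrite -(H Vij Vijσ) (mem_merge_blocks_subblocks pσ r Vijσ sBij).
  by rewrite iVij andbF orbF => /eqP.
have other V : V \in σ -> V != Vij -> [/\ i \notin V, j \notin V & V \in τ].
  move=> Vσ nV.
  have iV : i \notin V by apply: contra nV => iV; rewrite (partition_eq_block pσ Vσ Vijσ iV iVij).
  have jV : j \notin V by apply: contra nV => jV; rewrite (partition_eq_block pσ Vσ Vijσ jV jVij).
  split=> //; have := set11 V; rewrite -(H V Vσ) merge_blocks_id ?in_subblocks => [/andP[]//|U].
  rewrite in_subblocks => /andP[_ /subsetP sUV].
  by apply/andP; split; [apply: contra iV | apply: contra jV] => /sUV.
apply/setP => U; rewrite (mem_merge_blocks pτ iX jX); apply/idP/idP.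
  case/orP => [/eqP->|/and3P[Uτ iU jU]]; first by rewrite -eVij.
  have [V Vσ sUV] := rr U Uτ; case: (eqVneq V Vij) => [eV|nV].
    by move: (merged_block_meets Uτ); rewrite -eVij -eV sUV (negbTE iU) (negbTE jU) => /(_ isT).
  have [_ _ Vτ] := other V Vσ nV; have [x xU] := partition_block_witness pτ Uτ.
  by rewrite (partition_eq_block pτ Uτ Vτ xU (subsetP sUV x xU)).
move=> Uσ; case: (eqVneq U Vij) => [->|nU]; first by rewrite eVij eqxx.
by have [iU jU Uτ] := other U Uσ nU; rewrite Uτ iU jU orbT.
Qed.

End MergeRefinement.

Lemma merge_blocks_eq σ τ : ncpart X σ -> ncpart X τ -> pblock σ i = pblock σ j ->
  (merge_blocks τ == σ) = refines τ σ && [forall V in σ, merge_blocks (subblocks τ V) == [set V]].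
Proof.
move=> Nσ Nτ eσ; apply/eqP/andP => [<-|[r /forall_inP H]].
  by split; [exact: refines_merge_blocks | apply/forall_inP => V /(merge_blocks_subblocks Nτ) ->].
by apply: merge_blocks_eq_of_subblocks => // V /H /eqP.
Qed.

End MergeIn.

Definition addj U := if i \in U then j |: U else U.

Lemma in_addj U x : (x \in addj U) = ((i \in U) && (x == j)) || (x \in U).
Proof. by rewrite /addj; case: ifP => iU; rewrite ?inE ?iU //=. Qed.

Lemma subset_addj U : U \subset addj U.
Proof. by apply/subsetP => x xU; rewrite in_addj xU orbT. Qed.

Lemma addjK U : j \notin U -> addj U :\ j = U.
Proof. by move=> jU; rewrite /addj; case: ifP => _; rewrite ?setU1K // setD1_notin. Qed.

Section AddPoint.
Variable U : {set T}.
Hypotheses (US : U \subset S0 :\ j) (iU : i \in U).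
Let X := j |: U.

Let jU : j \notin U.
Proof. by apply/negP => /(subsetP US); rewrite !inE eqxx. Qed.

Let US0 : U \subset S0.
Proof. by apply: subset_trans US (subD1set _ _). Qed.

Definition addj_part π := [set addj W | W in π].
Definition delj_part σ := [set V :\ j | V in σ].

Lemma addj_notin W : W \subset U -> j \notin W.
Proof. by move=> /subsetP sW; apply/negP => /sW; rewrite (negbTE jU). Qed.

Lemma addj_part_partition π : partition π U -> partition (addj_part π) X.
Proof.
move=> pπ; have jW W : W \in π -> j \notin W by move=> Wπ; apply: addj_notin (partitionS pπ Wπ).
apply: partitionI.
- move=> V /imsetP[W Wπ ->]; have [x xW] := partition_block_witness pπ Wπ.
  by apply/set0Pn; exists x; exact: (subsetP (subset_addj W)).
- move=> V /imsetP[W Wπ ->]; apply/subsetP => x; rewrite in_addj => /orP[/andP[_ /eqP->]|xW].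
    by rewrite setU11.
  by rewrite setU1r // (subsetP (partitionS pπ Wπ)).
- move=> x /setU1P[->|xU].
    have [W Wπ iW] := partition_exists_block pπ iU.
    by exists (addj W); rewrite ?imset_f // in_addj iW eqxx.
  have [W Wπ xW] := partition_exists_block pπ xU.
  by exists (addj W); rewrite ?imset_f // in_addj xW orbT.
- move=> V V' x /imsetP[W Wπ ->] /imsetP[W' W'π ->]; rewrite !in_addj.
  case: (eqVneq x j) => [->|nxj]; rewrite ?andbT ?andbF /=; last first.
    by move=> xW xW'; rewrite (partition_eq_block pπ Wπ W'π xW xW').
  rewrite (negbTE (jW W Wπ)) (negbTE (jW W' W'π)) !orbF => iW iW'.
  by rewrite (partition_eq_block pπ Wπ W'π iW iW').
Qed.

Lemma addj_part_ncpart π : ncpart U π -> ncpart X (addj_part π).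
Proof.
move=> /andP[pπ nπ]; rewrite /ncpart addj_part_partition //=.
have jW W : W \in π -> j \notin W by move=> Wπ; apply: addj_notin (partitionS pπ Wπ).
have key W W' : W \in π -> W' \in π -> W != W' -> i \in W ->
    ~~ crossing (j |: W) W' && ~~ crossing W' (j |: W).
  move=> Wπ W'π nWW' iW.
  have iW' : i \notin W'.
    by apply/negP => iW'; move: nWW'; rewrite (partition_eq_block pπ Wπ W'π iW iW') eqxx.
  have W'S : W' \subset S0 := subset_trans (partitionS pπ W'π) US0.
  have H := crossing_merged_block iW (set11 j) W'S iW' (jW W' W'π).
  rewrite -negb_or; apply/negP => cr; move: H; rewrite setUC -/(j |: W) cr => /(_ isT).
  rewrite (negbTE (noncrossingP _ nπ _ _ Wπ W'π nWW')) (negbTE (noncrossingP _ nπ _ _ W'π Wπ _)) ?(eq_sym W') //.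
  by rewrite (negbTE (crossing1l _ _)) (negbTE (crossing1r _ _)).
apply/noncrossingP => V V' /imsetP[W Wπ ->] /imsetP[W' W'π ->] nV.
have nWW' : W != W' by apply: (contraNneq _ nV) => ->.
have nW'W : W' != W by rewrite eq_sym.
rewrite /addj; case: ifP => iW; case: ifP => iW'.
- by move: nWW'; rewrite (partition_eq_block pπ Wπ W'π iW iW') eqxx.
- by case/andP: (key W W' Wπ W'π nWW' iW).
- by case/andP: (key W' W W'π Wπ nW'W iW').
- exact: (noncrossingP _ nπ).
Qed.

Lemma addj_part_pblock π : ncpart U π -> pblock (addj_part π) i == pblock (addj_part π) j.
Proof.
move=> Nπ; have [pA _] := andP (addj_part_ncpart Nπ); have [pπ _] := andP Nπ.
have [W Wπ iW] := partition_exists_block pπ iU.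
have tA := partition_trivIset pA.
have hW : addj W \in addj_part π by apply: imset_f.
rewrite (def_pblock tA hW (_ : i \in addj W)) ?(def_pblock tA hW (_ : j \in addj W)) //.
  by rewrite in_addj iW eqxx.
by rewrite in_addj iW orbT.
Qed.

Lemma addj_partK π : ncpart U π -> delj_part (addj_part π) = π.
Proof.
move=> /andP[pπ _]; rewrite /delj_part /addj_part -imset_comp -[RHS]imset_id.
apply: eq_in_imset => W Wπ /=; apply: addjK; exact: addj_notin (partitionS pπ Wπ).
Qed.

Lemma delj_part_ncpart σ : ncpart X σ -> pblock σ i == pblock σ j -> ncpart U (delj_part σ).
Proof.
move=> /andP[pσ nσ] /eqP eσ; have cσ := cover_partition pσ.
have iX : i \in X by rewrite setU1r.
have jX : j \in X by rewrite setU11.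
have ji V : V \in σ -> j \in V -> i \in V.
  move=> Vσ jV; have := def_pblock (partition_trivIset pσ) Vσ jV.
  by rewrite -eσ => <-; rewrite mem_pblock cσ.
apply/andP; split.
  apply: partitionI.
  - move=> V' /imsetP[V Vσ ->]; have [x xV] := partition_block_witness pσ Vσ; apply/set0Pn.
    case: (eqVneq x j) => [exj|nxj].
      exists i; rewrite !inE neq_ij (ji V Vσ) //; by rewrite -exj.
    by exists x; rewrite !inE nxj.
  - move=> V' /imsetP[V Vσ ->]; apply/subsetP => x; rewrite !inE => /andP[nxj xV].
    by have := subsetP (partitionS pσ Vσ) x xV; rewrite !inE (negbTE nxj).
  - move=> x xU; have xX : x \in X by rewrite setU1r.
    have [V Vσ xV] := partition_exists_block pσ xX; exists (V :\ j); first exact: imset_f.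
    rewrite !inE xV andbT; apply/negP => /eqP e; by move: jU; rewrite -e xU.
  - move=> V1 V2 x /imsetP[W1 W1σ ->] /imsetP[W2 W2σ ->]; rewrite !inE => /andP[_ x1] /andP[_ x2].
    by rewrite (partition_eq_block pσ W1σ W2σ x1 x2).
apply/noncrossingP => V1 V2 /imsetP[W1 W1σ ->] /imsetP[W2 W2σ ->] n12.
have nW : W1 != W2 by apply: (contraNneq _ n12) => ->.
apply: contra (noncrossingP _ nσ _ _ W1σ W2σ nW); apply: crossingS; exact: subD1set.
Qed.

Lemma delj_partK σ : ncpart X σ -> pblock σ i == pblock σ j -> addj_part (delj_part σ) = σ.
Proof.
move=> /andP[pσ _] /eqP eσ; have cσ := cover_partition pσ.
have tσ := partition_trivIset pσ.
rewrite /delj_part /addj_part -imset_comp -[RHS]imset_id; apply: eq_in_imset => V Vσ /=.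
rewrite /addj !inE neq_ij /=.
case: (boolP (i \in V)) => iV.
  have jV : j \in V.
    by have := def_pblock tσ Vσ iV; rewrite eσ => <-; rewrite mem_pblock cσ setU11.
  by rewrite setD1K.
have jV : j \notin V.
  apply/negP => jV; have := def_pblock tσ Vσ jV; rewrite -eσ => e.
  by move: iV; rewrite -e mem_pblock cσ setU1r.
by rewrite setD1_notin.
Qed.

Lemma sum_ncpart_addj (R : comRingType) (F : {set T} -> R) :
  \sum_(σ | ncpart X σ && (pblock σ i == pblock σ j)) \prod_(V in σ) F V =
  \sum_(π | ncpart U π) \prod_(W in π) F (addj W).
Proof.
rewrite (reindex_onto addj_part delj_part); last by move=> σ /andP[Nσ eσ]; exact: delj_partK.
have eqP' π : (ncpart X (addj_part π) && (pblock (addj_part π) i == pblock (addj_part π) j)) &&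
              (delj_part (addj_part π) == π) = ncpart U π.
  apply/idP/idP => [/andP[/andP[NA eA] /eqP <-]|Nπ]; first exact: delj_part_ncpart.
  by rewrite addj_part_ncpart // addj_part_pblock // addj_partK ?eqxx.
apply: eq_big => [π|π]; first exact: eqP'.
rewrite eqP' => Nπ; rewrite big_imset //.
move=> W1 W2 W1π W2π e; have [pπ _] := andP Nπ.
by rewrite -(addjK (addj_notin (partitionS pπ W1π))) e addjK // (addj_notin (partitionS pπ W2π)).
Qed.

End AddPoint.

Section ProductsAsArguments.
Variable R : comRingType.
Variable f : {set T} -> R.

Definition merged_cumulant X := \sum_(ρ | ncpart X ρ && (merge_blocks ρ == [set X])) \prod_(W in ρ) cumulant f W.

Lemma merged_cumulant_id W : W != set0 -> i \notin W -> j \notin W -> merged_cumulant W = cumulant f W.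
Proof.
move=> W0 iW jW; rewrite /merged_cumulant (big_pred1 [set W]) ?big_set1 // => ρ.
apply/andP/eqP => [[Nρ /eqP <-]|->]; last first.
  rewrite ncpart1 // merge_blocks_id ?eqxx // => V; rewrite inE => /eqP->; by rewrite iW jW.
rewrite merge_blocks_id // => V Vρ; have sV := partitionS (proj1 (andP Nρ)) Vρ.
by apply/andP; split; apply/negP => /(subsetP sV); apply/negP.
Qed.

(* Cumulants with products as arguments, for the single product of the adjacent
   entries [i] and [j]: the moments [V |-> f (addj V)] let [i] stand for the pair
   [{i, j}].  The right-hand side satisfies the moment-cumulant formula for
   these moments, hence equals their cumulant. *)
Lemma cumulant_addj U : U \subset S0 :\ j -> U != set0 ->
  cumulant (fun V => f (addj V)) U = merged_cumulant (addj U).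
Proof.
move=> sU U0.
symmetry; apply: (@cumulant_unique R n (fun V => f (addj V)) (fun V => merged_cumulant (addj V)) (S0 :\ j)) => //.
move=> U' sU' U'0.
have jU' : j \notin U' by apply/negP => /(subsetP sU'); rewrite !inE eqxx.
case: (boolP (i \in U')) => iU'; last first.
  rewrite /addj (negbTE iU') moment_cumulant //; apply: eq_bigr => π Nπ.
  apply: eq_bigr => W Wπ; have sW := partitionS (proj1 (andP Nπ)) Wπ.
  have iW : i \notin W by apply/negP => /(subsetP sW); apply/negP.
  have jW : j \notin W by apply/negP => /(subsetP sW); apply/negP.
  by rewrite (negbTE iW) merged_cumulant_id // (partition_neq0 (proj1 (andP Nπ)) Wπ).
set X := j |: U'.
have hU' : addj U' = X by rewrite /addj iU'.
have XS : X \subset S0.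
  by rewrite subUset sub1set jS (subset_trans sU' (subD1set _ _)).
have iX : i \in X by rewrite setU1r.
have jX : j \in X by rewrite setU11.
have X0 : X != set0 by apply/set0Pn; exists j.
rewrite hU' moment_cumulant // -(sum_ncpart_addj sU' iU' merged_cumulant).
rewrite (partition_big (merge_blocks) (fun σ => ncpart X σ && (pblock σ i == pblock σ j))); last first.
  move=> π Nπ; have [e1 e2] := pblock_merge_blocks XS iX jX Nπ.
  by rewrite merge_blocks_ncpart // e1 e2 eqxx.
apply: eq_bigr => σ /andP[Nσ /eqP eσ].
rewrite /merged_cumulant (@prod_sum_ncpart n R X σ (fun V ρ => merge_blocks ρ == [set V]) (fun V ρ => \prod_(W in ρ) cumulant f W)) //.
apply: eq_big => [τ|τ /andP[Nτ /eqP eJ]].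
  by case Nτ: (ncpart X τ) => //=; rewrite (merge_blocks_eq XS iX jX Nσ Nτ eσ).
have r : refines τ σ by have := merge_blocks_eq XS iX jX Nσ Nτ eσ; rewrite eJ eqxx => /esym/andP[].
by rewrite (prod_refines _ (proj1 (andP Nσ)) (proj1 (andP Nτ)) r).
Qed.

End ProductsAsArguments.

Lemma merge_blocks1 ρ : ncpart S0 ρ -> merge_blocks ρ = [set S0] ->
  (forall W, W \in ρ -> W = pblock ρ i \/ W = pblock ρ j) /\ pblock ρ i :|: pblock ρ j = S0.
Proof.
move=> /andP[pρ _] eJ; have JM := mem_merge_blocks pρ iS jS; have cρ := cover_partition pρ.
have tρ := partition_trivIset pρ.
have e0 : pblock ρ i :|: pblock ρ j = S0.
  have := set11 S0; rewrite -eJ JM iS /= andbF orbF => /eqP; by [].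
split => // W Wρ; case: (boolP (i \in W)) => iW; first by left; rewrite (def_pblock tρ Wρ iW).
case: (boolP (j \in W)) => jW; first by right; rewrite (def_pblock tρ Wρ jW).
have : W \in merge_blocks ρ by rewrite JM Wρ iW jW orbT.
by rewrite eJ inE => /eqP eW; move: iW; rewrite eW iS.
Qed.

End MergeAdjacent.

(** * Freeness and mixed cumulants *)

Section Moments.
Variables (K : comRingType) (B : algType K) (phi : B -> K).
Hypotheses (phi_add : forall a b, phi (a + b) = phi a + phi b)
           (phi_scale : forall c a, phi (c *: a) = c * phi a)
           (phi_unit : phi 1 = 1).
Variable n : nat.
Implicit Types (y : 'I_n -> B) (S U V X : {set 'I_n}).

Definition moment y V := phi (\prod_(i in V) y i).

Lemma prod_upd y k X w : k \in X ->
  \prod_(l in X) [eta y with k |-> w] l =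
  \prod_(l in [set l in X | (l < k)%N]) y l * (w * \prod_(l in [set l in X | (k < l)%N]) y l).
Proof.
move=> kX; rewrite (prod_split_at _ kX) /= eqxx.
congr (_ * (_ * _)); apply: eq_bigr => l; rewrite inE => /andP[_];
  by case: eqP => // ->; rewrite ltnn.
Qed.

Lemma moment_upd_notin y k u V : k \notin V -> moment [eta y with k |-> u] V = moment y V.
Proof.
move=> kV; congr phi; apply: eq_bigr => l lV /=.
by case: eqP => // lk; rewrite -lk lV in kV.
Qed.

Lemma cumulant_upd_add_scalar y k S u c : k \in S ->
  cumulant (moment [eta y with k |-> u + c%:A]) S =
  cumulant (moment [eta y with k |-> u]) S + c * cumulant (moment [eta y with k |-> 1]) S.
Proof.
move=> kS; rewrite /cumulant big_distrr -big_split; apply: eq_bigr => σ /andP[pσ _] /=.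
have kc : k \in cover σ by rewrite (cover_partition pσ).
have Bσ := pblock_mem kc; rewrite !(bigD1 _ Bσ) /=.
have others w : \prod_(V in σ | V != pblock σ k) moment [eta y with k |-> w] V =
                \prod_(V in σ | V != pblock σ k) moment y V.
  apply: eq_bigr => V /andP[Vσ nV]; apply: moment_upd_notin; apply: contra nV => kV.
  by rewrite (def_pblock (partition_trivIset pσ) Vσ kV).
rewrite !others /moment !prod_upd ?mem_pblock // mulrDl mulrDr phi_add -scalerAl mul1r.
by rewrite -scalerAr phi_scale !mulrDl -!mulrA.
Qed.

Lemma cumulant_upd1 y k S : k \in S -> (1 < #|S|)%N ->
  cumulant (moment [eta y with k |-> 1]) S = 0.
Proof.
move=> kS cS; apply: (cumulant_blind_point (k := k)) => //.
  by rewrite /moment big_set0 phi_unit.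
move=> U; case: (boolP (k \in U)) => kU; last by rewrite setD1_notin.
have eU : U :\ k = [set l in U | (l < k)%N] :|: [set l in U | (k < l)%N].
  apply/setP => l; rewrite !inE; case: (ltngtP l k) => [lk|kl|/val_inj->].
  - by rewrite -val_eqE (ltn_eqF lk) andbT andbF orbF.
  - by rewrite -val_eqE (gtn_eqF kl) andbT andbF.
  - by rewrite eqxx /= !andbF.
rewrite /moment prod_upd // mul1r eU prod_setU_ordered => [|a b]; last first.
  by rewrite !inE => /andP[_ ak] /andP[_]; exact: ltn_trans.
by congr (phi (_ * _)); apply: eq_bigr => l /[!inE] /andP[_] /=; case: eqP => // ->; rewrite ltnn.
Qed.

Definition center x := x - (phi x)%:A.

Lemma phi_center x : phi (center x) = 0.
Proof. by rewrite /center phi_add -scaleNr phi_scale phi_unit mulr1 subrr. Qed.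

(* [y k = center (y k) + (phi (y k))%:A], and by multilinearity the scalar part
   contributes [phi (y k)] times a cumulant with the entry [1]. *)
Lemma cumulant_center y k S : k \in S -> (1 < #|S|)%N ->
  cumulant (moment y) S = cumulant (moment [eta y with k |-> center (y k)]) S.
Proof.
move=> kS cS; rewrite -[RHS]addr0 -(mulr0 (phi (y k))) -(cumulant_upd1 y kS cS).
rewrite -cumulant_upd_add_scalar //; apply: eq_cumulant => V; congr phi.
by apply: eq_bigr => l _ /=; case: eqP => // ->; rewrite subrK.
Qed.

Definition center_on y X l := if l \in X then center (y l) else y l.

Lemma cumulant_center_on y S X : X \subset S -> (1 < #|S|)%N ->
  cumulant (moment y) S = cumulant (moment (center_on y X)) S.
Proof.
move=> sXS cS; have [m] := ubnP #|X|; elim: m X sXS => // m IH X sXS ltX.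
case: (set_0Vmem X) => [->|[k kX]].
  by apply: eq_cumulant => V; congr phi; apply: eq_bigr => l _; rewrite /center_on inE.
rewrite (IH (X :\ k)) ?(subset_trans (subD1set _ _) sXS) //; last first.
  by rewrite (cardsD1 k X) kX add1n ltnS in ltX.
rewrite (cumulant_center _ (subsetP sXS k kX) cS); apply: eq_cumulant => V; congr phi.
apply: eq_bigr => l _ /=; rewrite /center_on !inE.
by case: eqP => [->|_] /=; rewrite ?eqxx ?kX.
Qed.

Lemma moment_upd_mul y i j S V : adjacent S i j -> V \subset S :\ j ->
  moment [eta y with i |-> y i * y j] V = moment y (addj i j V).
Proof.
move=> adjij sV; have /and4P[_ jS ij /forall_inP between] := adjij.
have jV : j \notin V by apply/negP => /(subsetP sV); rewrite !inE eqxx.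
rewrite /moment /addj; case: ifP => iV; last first.
  by congr phi; apply: eq_bigr => l lV /=; case: eqP => // e; rewrite -e lV in iV.
have lower : [set l in j |: V | (l < i)%N] = [set l in V | (l < i)%N].
  apply/setP => l; rewrite !inE; case: eqP => // ->.
  by rewrite ltnNge (ltnW ij) /= andbF.
have upper : [set l in j |: V | (i < l)%N] = [set j] :|: [set l in V | (i < l)%N].
  by apply/setP => l; rewrite !inE; case: eqP => // ->; rewrite ij.
rewrite prod_upd // (prod_split_at _ (setU1r j iV)) lower upper.
rewrite prod_setU_ordered ?big_set1 ?mulrA // => _ l /set1P-> /[!inE] /andP[lV il].
have lS : l \in S by move: (subsetP sV l lV); rewrite inE => /andP[].
have lj : val l != val j by apply: contraNneq jV => /val_inj <-.
by move: (between l lS); rewrite il /= -leqNgt leq_eqVlt eq_sym (negbTE lj).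
Qed.

End Moments.

Lemma cumulant_moment_enum (K : comRingType) (B : algType K) (phi : B -> K) n
    (y : 'I_n -> B) (V : {set 'I_n}) :
  cumulant (moment phi y) V = cumulant (moment phi (fun i : 'I_#|V| => y (enum_val i))) [set: 'I_#|V|].
Proof.
rewrite cumulant_enum; apply: eq_cumulant => W.
by rewrite /moment prod_imset_mono //; exact: enum_val_mono.
Qed.

Section Freeness.
Variables (K : numClosedFieldType) (B : algType K) (phi : B -> K).
Hypotheses (phi_add : forall a b, phi (a + b) = phi a + phi b)
           (phi_scale : forall c a, phi (c *: a) = c * phi a)
           (phi_unit : phi 1 = 1).
Variables a b : B.

Definition colored n (y : 'I_n -> B) (col : 'I_n -> bool) :=
  forall k, in_alg1 (if col k then a else b) (y k).

Definition mixed_cumulants_vanish := forall n (y : 'I_n -> B) col, colored y col ->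
  (exists k l, col k != col l) -> cumulant (moment phi y) [set: 'I_n] = 0.

Lemma mixed_cumulants_vanish_free : mixed_cumulants_vanish -> free_scalar phi a b.
Proof.
move=> van N c col N0 c_in c_alt c_centered; pose y (k : 'I_N) := c k.
have S0 : [set: 'I_N] != set0 by apply/set0Pn; exists (Ordinal N0).
have -> : \prod_(0 <= k < N) c k = \prod_(k in [set: 'I_N]) y k.
  by rewrite big_mkord; apply: eq_bigl => k; rewrite inE.
rewrite -/(moment phi y [set: 'I_N]) (moment_cumulant _ S0); apply: big1 => π Nπ.
apply: (prod_cumulant_alternating (col := fun k : 'I_N => col k) Nπ S0).
- by move=> u v /adjacent_setT ev; have := c_alt u; rewrite -ev ltn_ord => /(_ isT).
- move=> V Vπ /forall_inPn[x xV /forall_inPn[x' x'V ne]].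
  rewrite cumulant_moment_enum (van _ _ (fun i : 'I_#|V| => col (enum_val i : 'I_N))) // => [k|].
    exact: c_in.
  by exists (enum_rank_in xV x), (enum_rank_in xV x'); rewrite !enum_rankK_in.
- by move=> k _; rewrite /moment big_set1 c_centered.
Qed.

Lemma in_alg1_center z x : in_alg1 z x -> in_alg1 z (center phi x).
Proof. by move=> zx; rewrite /center -scaleNr; apply: alg1_add => //; exact: alg1_c. Qed.

Section FreeMixedCumulants.
Hypothesis free : free_scalar phi a b.

Lemma free_moment_alternating n (w : 'I_n -> B) col S : colored w col -> S != set0 ->
  alternating S col -> (forall k, k \in S -> phi (w k) = 0) -> moment phi w S = 0.
Proof.
move=> cw S0 altS w_centered; have [x0 x0S] := set0Pn _ S0.
have ev (k : 'I_#|S|) : nth x0 (enum S) k = enum_val k by rewrite (enum_val_nth x0).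
rewrite /moment -{1}(imset_enum_val S) prod_imset_mono; last exact: enum_val_mono.
have -> : \prod_(k in [set: 'I_#|S|]) w (enum_val k) =
          \prod_(0 <= k < #|S|) w (nth x0 (enum S) k).
  by rewrite big_mkord; apply: eq_big => [k|k _]; rewrite ?inE ?ev.
apply: (free (ind := fun k => col (nth x0 (enum S) k))); first by rewrite card_gt0.
- by move=> k kS; rewrite (ev (Ordinal kS)); exact: cw.
- move=> k kS; have kS' : (k < #|S|)%N := ltnW kS.
  rewrite (ev (Ordinal kS)) (ev (Ordinal kS')); apply: altS.
  apply: adjacent_succ; rewrite ?enum_valP ?enum_val_mono //=.
  move=> x xS; rewrite -(enum_rankK_in xS xS) enum_val_mono => lt.
  by rewrite leqNgt enum_val_mono -leqNgt.
- by move=> k kS; rewrite (ev (Ordinal kS)) w_centered ?enum_valP.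
Qed.

Section InductionStep.
Variables (n : nat) (col : 'I_n -> bool) (S : {set 'I_n}).
Hypothesis mixedS : ~~ monochrome col S.
Hypothesis IH : forall (y : 'I_n -> B) (W : {set 'I_n}), colored y col -> (#|W| < #|S|)%N ->
  ~~ monochrome col W -> cumulant (moment phi y) W = 0.

Let S0 : S != set0.
Proof. by rewrite -card_gt0 (ltn_trans _ (monochromeN_card mixedS)). Qed.

(* With [y i * y j] in slot [i], the cumulant over [S :\ j] vanishes by induction;
   by [cumulant_addj] it is the sum of the [\prod_(V in ρ) cumulant] over the [ρ]
   whose merge is [1_S], and besides [1_S] these [ρ] have two blocks, one of them
   mixed. *)
Lemma cumulant_mixed_adjacent y i j : colored y col -> adjacent S i j -> col i = col j ->
  cumulant (moment phi y) S = 0.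
Proof.
move=> cy adjij cij; have /and4P[iS jS ij _] := adjij.
have nij : i != j by apply: contraTneq ij => ->; rewrite ltnn.
have iSj : i \in S :\ j by rewrite !inE nij.
pose z := [eta y with i |-> y i * y j].
have cz : colored z col.
  move=> k; rewrite /z /=; case: eqP => [->|_]; last exact: cy.
  by apply: alg1_mul; [exact: cy | rewrite cij; exact: cy].
have Sj0 : S :\ j != set0 by apply/set0Pn; exists i.
have := cumulant_addj adjij (moment phi y) (subxx (S :\ j)) Sj0.
rewrite /addj iSj setD1K // -(eq_in_cumulant (fun V sV => moment_upd_mul phi y adjij sV)).
rewrite IH //; first last.
- by apply: contra mixedS; exact: monochrome_setD1 iS nij cij.
- by rewrite (cardsD1 j S) jS.
move=> /esym; rewrite /merged_cumulant (bigD1 [set S]) /=; last first.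
  by rewrite ncpart1 // (merge_blocks_set1 adjij) eqxx.
rewrite big_set1 big1 ?addr0 // => ρ /andP[/andP[Nρ /eqP eJ] nρ1].
have [_ eS] := merge_blocks1 adjij Nρ eJ.
have cρ := cover_partition (proj1 (andP Nρ)).
have [W Wρ mW] : exists2 W, W \in ρ & ~~ monochrome col W.
  apply/exists_inP; apply: contraR mixedS => /exists_inPn mono.
  have monoB u : u \in S -> monochrome col (pblock ρ u).
    by move=> uS; apply/negbNE/mono/pblock_mem; rewrite cρ.
  have colB u : u \in S -> col u = col i.
    rewrite -{1}eS => /setUP[] uB.
      by apply: (monochromeP _ _ (monoB i iS)); rewrite // mem_pblock cρ.
    by rewrite cij; apply: (monochromeP _ _ (monoB j jS)); rewrite // mem_pblock cρ.
  by apply/monochromeP => u v uS vS; rewrite !colB.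
rewrite (bigD1 W) //= IH ?mul0r //.
by have [] := ncpart_block_proper Nρ nρ1 Wρ.
Qed.

Lemma cumulant_mixed_alternating y : colored y col -> alternating S col ->
  cumulant (moment phi y) S = 0.
Proof.
move=> cy altS; pose yc := center_on phi y S.
have cyc : colored yc col.
  by move=> k; rewrite /yc /center_on; case: (k \in S); [apply: in_alg1_center|]; exact: cy.
rewrite (cumulant_center_on phi_add phi_scale phi_unit y (subxx S) (monochromeN_card mixedS)).
have := moment_cumulant (moment phi yc) S0.
rewrite (free_moment_alternating cyc S0 altS) => [|k kS]; last by rewrite /yc /center_on kS phi_center.
rewrite (bigD1 [set S]) ?ncpart1 //= big_set1 big1 ?addr0 => [/esym//|π /andP[Nπ nπ1]].
apply: (prod_cumulant_alternating Nπ S0 altS) => [V Vπ mV|k kS].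
  by rewrite IH //; have [] := ncpart_block_proper Nπ nπ1 Vπ.
by rewrite /moment big_set1 /yc /center_on kS phi_center.
Qed.

End InductionStep.

(* By strong induction on [#|S|]: two adjacent points of the same colour are
   merged, which shortens [S]; otherwise the colours alternate along [S] and
   freeness applies to the centred entries. *)
Lemma free_mixed_cumulant_eq0 n (y : 'I_n -> B) col S : colored y col ->
  ~~ monochrome col S -> cumulant (moment phi y) S = 0.
Proof.
move=> + mixedS; have [m] := ubnP #|S|; elim: m S y mixedS => // m IH S y mixedS ltS cy.
have IHS y' (W : {set 'I_n}) : colored y' col -> (#|W| < #|S|)%N -> ~~ monochrome col W ->
    cumulant (moment phi y') W = 0.
  by move=> cy' lt mW; apply: IH => //; exact: leq_trans lt ltS.
case: (boolP [exists i, exists j, adjacent S i j && (col i == col j)]).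
  case/existsP=> i /existsP[j /andP[adjij /eqP cij]].
  exact: (@cumulant_mixed_adjacent n col S mixedS IHS y i j cy adjij cij).
move=> noadj; apply: (@cumulant_mixed_alternating n col S mixedS IHS y cy) => u v adjuv.
by apply: contra noadj => cuv; apply/existsP; exists u; apply/existsP; exists v; rewrite adjuv cuv.
Qed.

Lemma free_mixed_cumulants_vanish : mixed_cumulants_vanish.
Proof.
move=> n y col cy [k [l nkl]]; apply: free_mixed_cumulant_eq0 cy _.
by apply: contra nkl => /monochromeP mono; rewrite (mono k l) ?in_setT.
Qed.

End FreeMixedCumulants.

End Freeness.

Section ZeroVariable.
Variables (K : numClosedFieldType) (B : algType K) (phi : B -> K).
Hypotheses (phi_scale : forall c a, phi (c *: a) = c * phi a) (phi_unit : phi 1 = 1).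

Lemma in_alg1_0 (c : B) : in_alg1 0 c -> exists r : K, c = r%:A.
Proof.
elim=> [|r|_ _ _ [r ->] _ [s ->]|_ _ _ [r ->] _ [s ->]].
- by exists 0; rewrite scale0r.
- by exists r.
- by exists (r + s); rewrite scalerDl.
- by exists (r * s); rewrite -scalerAl mul1r scalerA.
Qed.

Lemma prod_nat_eq0 (c : nat -> B) n k : (k < n)%N -> c k = 0 -> \prod_(0 <= i < n) c i = 0.
Proof.
move=> kn ck; rewrite (big_cat_nat (leq0n k) (ltnW kn)) /= [\prod_(k <= i < n) _]big_ltn //.
by rewrite ck mul0r mulr0.
Qed.

(* The only centred element of the algebra generated by [0] is [0], and an
   alternating word of length at least two has an entry there. *)
Lemma free_scalar0 a b : a = 0 \/ b = 0 -> free_scalar phi a b.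
Proof.
move=> ab [//|[|n]] c col _ c_in c_alt c_centered; first by rewrite big_nat1 c_centered.
have [k kn hk] : exists2 k, (k < n.+2)%N & in_alg1 0 (c k).
  move: (c_alt 0%N isT) (c_in 0%N isT) (c_in 1%N isT).
  case: ab => e; rewrite e.
    by case: (col 0%N); case: (col 1%N) => //= _ h0 h1; [exists 0%N | exists 1%N].
  by case: (col 0%N); case: (col 1%N) => //= _ h0 h1; [exists 1%N | exists 0%N].
have [r er] := in_alg1_0 hk.
have r0 : r = 0 by have := c_centered k kn; rewrite er phi_scale phi_unit mulr1.
have phi0 : phi 0 = 0 by rewrite -(scale0r 1) phi_scale mul0r.
by rewrite (prod_nat_eq0 kn (_ : c k = 0)) // er r0 scale0r.
Qed.

End ZeroVariable.

(** * Direct products over D_N *)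

Section DirectProduct.
Variables (C : numClosedFieldType) (N : nat) (A : 'I_N -> algType C).

Lemma in_algD_component (x y : prodA A) j : in_algD x y -> in_alg1 (x j) (y j).
Proof.
elim=> [|d|y1 z1 _ h1 _ h2|y1 z1 _ h1 _ h2]; [exact: alg1_a | exact: alg1_c | |].
- exact: alg1_add.
- exact: alg1_mul.
Qed.

Lemma in_alg1_lift (x : prodA A) j (c : A j) : in_alg1 (x j) c ->
  exists2 y, in_algD x y & y j = c.
Proof.
elim=> [|r|_ _ _ [y1 h1 <-] _ [z1 h2 <-]|_ _ _ [y1 h1 <-] _ [z1 h2 <-]].
- by exists x => //; exact: algD_x.
- by exists (prod_D A (fun=> r)) => //; exact: algD_D.
- by exists (prod_add y1 z1) => //; exact: algD_add.
- by exists (prod_mul y1 z1) => //; exact: algD_mul.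
Qed.

Lemma cumD_cumulant (phi : forall j, A j -> C) n (y : 'I_n -> prodA A) j :
  cumD phi y j = cumulant (moment (phi j) (fun i => y i j)) [set: 'I_n].
Proof. by apply: eq_bigr => P _; rewrite mobE. Qed.

End DirectProduct.

Theorem mainTheorem3 (C : numClosedFieldType) (N : nat) (A : 'I_N -> algType C)
    (phi : forall j, A j -> C)
    (phi_add : forall j (a b : A j), phi j (a + b) = phi j a + phi j b)
    (phi_scale : forall j (c : C) (a : A j), phi j (c *: a) = c * phi j a)
    (phi_unit : forall j, phi j 1 = 1)
    (x1 x2 : prodA A) :
  free_over_D phi x1 x2 <->
  (forall j : 'I_N, x1 j != 0 -> x2 j != 0 -> free_scalar (phi j) (x1 j) (x2 j)).
Proof.
split=> [freeD j _ _ | free_j n y col y_in mixed j].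
  apply: mixed_cumulants_vanish_free => n w col w_col mixed.
  have lift k : exists2 yk, in_algD (if col k then x1 else x2) yk & yk j = w k.
    by apply: in_alg1_lift; have := w_col k; case: (col k).
  have [y y_in y_j] := fin_all_exists2 lift.
  rewrite -(freeD n y col y_in mixed j) cumD_cumulant.
  by apply: eq_cumulant => V; congr (phi j _); apply: eq_bigr => i _; rewrite y_j.
have free_j' : free_scalar (phi j) (x1 j) (x2 j).
  have [x10|x1n0] := eqVneq (x1 j) 0; first exact: free_scalar0 (or_introl x10).
  have [x20|x2n0] := eqVneq (x2 j) 0; first exact: free_scalar0 (or_intror x20).
  exact: free_j.
rewrite cumD_cumulant; apply: (free_mixed_cumulants_vanish (phi_add j) (phi_scale j) (phi_unit j) free_j') mixed => k.
by have := in_algD_component j (y_in k); case: (col k).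
Qed.
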